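(* Let $\mathbf{X}$ be $\mathbb{R}P^n$ with $G_{\mathbf{X}} = \mathrm{PGL}(n+1,\mathbb{R})$ ($n\ge 2$), or $\mathrm{Ein}^{p,q}$ with $G_{\mathbf{X}}=\mathrm{PO}(p+1,q+1)$ ($\min(p,q)\ge 2$), and fix a Riemannian metric on $\mathbf{X}$. Let $(g_k)$ be a sequence in $G_{\mathbf{X}}$, $(T_k)$ a sequence of positive numbers with $T_k\to\infty$, and $x \in \mathbf{X}$ such that: (1) for every sequence $x_k\rightarrow x$, we have $g_k x_k \rightarrow x$; (2) for every non-zero $v \in T_{x}\mathbf{X}$, $\frac{1}{T_k} \log \|D_{x}g_k v\| \rightarrow -1$. Then, up to passing to a subsequence, there exists an open set $W_{\max} \ni x$ which is an affine chart domain (the complement of a projective hyperplane) if $\mathbf{X} = \mathbb{R}P^n$, or a Minkowski patch if $\mathbf{X} = \mathrm{Ein}^{p,q}$, such that for every compact subset $K \subset W_{\max}$, $g_kK \rightarrow \{x\}$ for the Hausdorff topology.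
   Context: $\mathrm{Ein}^{p,q}$ is the set of isotropic lines of $\mathbb{R}^{p+1,q+1}$ with the induced conformal structure; a Minkowski patch of $\mathrm{Ein}^{p,q}$ is $M_y=\{[w]:B(v,w)\neq0\}$ for an isotropic vector $v$, $y=[v]$, where $B$ is the bilinear form of signature $(p+1,q+1)$. *)

From Stdlib Require Export Reals.
Open Scope R_scope.

(* Vectors of R^N are functions nat -> R (only coordinates 0..N-1 matter),
   matrices are functions nat -> nat -> R. *)
Definition Vec := nat -> R.
Definition Mat := nat -> nat -> R.

Fixpoint sumN (n : nat) (f : nat -> R) : R :=
  match n with O => 0 | S m => sumN m f + f m end.

Definition dot (N : nat) (u v : Vec) : R := sumN N (fun i => u i * v i).
Definition vnorm (N : nat) (u : Vec) : R := sqrt (dot N u u).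
Definition nonzero (N : nat) (u : Vec) : Prop := exists i, (i < N)%nat /\ u i <> 0.
Definition mv (N : nat) (A : Mat) (u : Vec) : Vec :=
  fun i => sumN N (fun j => A i j * u j).
Definition mm (N : nat) (A B : Mat) : Mat :=
  fun i j => sumN N (fun l => A i l * B l j).
Definition idm : Mat := fun i j => if Nat.eqb i j then 1 else 0.
Definition invertible (N : nat) (A : Mat) : Prop :=
  exists B : Mat, forall i j, (i < N)%nat -> (j < N)%nat ->
    mm N A B i j = idm i j /\ mm N B A i j = idm i j.

Definition qform (p q : nat) (u v : Vec) : R :=
  sumN (p + 1) (fun i => u i * v i)
  - sumN (q + 1) (fun i => u (p + 1 + i)%nat * v (p + 1 + i)%nat).

(* The model spaces: RP^n, and Ein^{p,q} (isotropic lines in R^{p+1,q+1}). *)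
Inductive model := RPn (n : nat) | Ein (p q : nat).

Definition mdim (X : model) : nat :=
  match X with RPn n => S n | Ein p q => (p + q + 2)%nat end.

Definition admissible (X : model) : Prop :=
  match X with RPn n => (2 <= n)%nat | Ein p q => (2 <= p)%nat /\ (2 <= q)%nat end.

(* u (a nonzero vector) represents a point [u] of X *)
Definition is_point (X : model) (u : Vec) : Prop :=
  nonzero (mdim X) u /\
  match X with RPn _ => True | Ein p q => qform p q u u = 0 end.

(* A matrix representing an element of G_X: PGL(n+1,R), resp. PO(p+1,q+1)
   (every element of these groups lifts to such a matrix, and the action on
   X is the induced action on lines). *)
Definition in_group (X : model) (A : Mat) : Prop :=
  invertible (mdim X) A /\
  match X with
  | RPn _ => True
  | Ein p q => forall u v, qform p q (mv (mdim X) A u) (mv (mdim X) A v) = qform p q u v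
  end.

(* Fixed Riemannian metric: the round metric of RP^{N-1} (quotient of the unit
   sphere), restricted to Ein^{p,q} in the second case.  Its distance function
   is the sine of the angle between lines (chordal metric on lines). *)
Definition pdist (N : nat) (u v : Vec) : R :=
  sqrt (1 - (dot N u v) ^ 2 / (dot N u u * dot N v v)).

Definition pconv (X : model) (xs : nat -> Vec) (x : Vec) : Prop :=
  Un_cv (fun k => pdist (mdim X) (xs k) x) 0.

(* Tangent vectors at [u]: the vector v (with <u,v> = 0) represents the tangent
   vector d/dt [u + t v] at t = 0.  For Ein also B(u,v) = 0. *)
Definition is_tangent (X : model) (u v : Vec) : Prop :=
  nonzero (mdim X) v /\ dot (mdim X) u v = 0 /\
  match X with RPn _ => True | Ein p q => qform p q u v = 0 end.

(* Round-metric norm of D_{[u]} g (v), g represented by A: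
   it is the norm of d/dt [A u + t A v] at t = 0. *)
Definition dnorm (N : nat) (A : Mat) (u v : Vec) : R :=
  let Au := mv N A u in
  let Av := mv N A v in
  vnorm N (fun i => Av i - (dot N Av Au / dot N Au Au) * Au i) / vnorm N Au.

(* Admissible "centers" of charts: a nonzero linear form a (affine chart
   {[w] : <a,w> <> 0}, complement of a projective hyperplane) for RP^n;
   an isotropic nonzero vector a (Minkowski patch {[w] : B(a,w) <> 0}) for Ein. *)
Definition chart_center (X : model) (a : Vec) : Prop :=
  match X with RPn _ => nonzero (mdim X) a | Ein _ _ => is_point X a end.

Definition in_chart (X : model) (a w : Vec) : Prop :=
  is_point X w /\
  match X with RPn _ => dot (mdim X) a w <> 0 | Ein p q => qform p q a w <> 0 end.

Definition strict_incr (phi : nat -> nat) : Prop := forall k, (phi k < phi (S k))%nat.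

(* compact subsets of X (metric space), as (sequential) compactness *)
Definition compactX (X : model) (K : Vec -> Prop) : Prop :=
  (forall y, K y -> is_point X y) /\
  forall ys : nat -> Vec, (forall k, K (ys k)) ->
    exists phi y, strict_incr phi /\ K y /\ pconv X (fun k => ys (phi k)) y.

Definition hconv_point (X : model) (S : nat -> Vec -> Prop) (x : Vec) : Prop :=
  forall eps, 0 < eps -> exists N0, forall k, (N0 <= k)%nat ->
    (forall z, S k z -> pdist (mdim X) z x < eps) /\
    (exists z, S k z /\ pdist (mdim X) z x < eps).

(* Normalise g_k so that G_k := g_k / |g_k x| sends x to a unit vector u_k, and split
   G_k y = <a_k, y> u_k + F_k y with F_k y orthogonal to u_k; for a tangent vector v,
   |F_k v| is the norm of D_x g_k v.  Hypothesis (2) makes F_k tend to 0 on tangent vectors, and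
   hypothesis (1) forces u_k -> x and, applied to the points x - v / <u_k, G_k v> of a
   projective line through x (sent by g_k orthogonally to u_k), keeps the radial parts
   <u_k, G_k v> bounded.  Once every column of G_k is bounded and F_k -> 0 on all of R^N, a
   subsequence of a_k converges to some a with <a, x> = 1, and on a compact set where
   <a, y> <> 0 the u_k-component of G_k y dominates, so g_k y -> x uniformly.
   In RP^n every direction is tangent or radial.  In Ein^{p,q} the remaining direction J x
   is controlled through g_k^-1 = J g_k^T J; the same identity shows that every a_k, hence a,
   is B-isotropic after applying J, so {<a, y> <> 0} is the Minkowski patch of [J a]. *)

From Pilot Require Import Defs.
From Stdlib Require Import Reals Lra Lia Psatz FunctionalExtensionality.
From Stdlib Require Import Classical ClassicalEpsilon.
Open Scope R_scope.

Lemma sumN_ext n f g : (forall i, (i < n)%nat -> f i = g i) -> sumN n f = sumN n g.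
Proof.
  induction n as [|n IH]; simpl; intros H; [reflexivity|].
  rewrite IH, H; [reflexivity|lia|intros; apply H; lia].
Qed.

Lemma sumN_plus n f g : sumN n (fun i => f i + g i) = sumN n f + sumN n g.
Proof. induction n; simpl; [lra|]. rewrite IHn; lra. Qed.

Lemma sumN_minus n f g : sumN n (fun i => f i - g i) = sumN n f - sumN n g.
Proof. induction n; simpl; [lra|]. rewrite IHn; lra. Qed.

Lemma sumN_scal_l n c f : sumN n (fun i => c * f i) = c * sumN n f.
Proof. induction n; simpl; [lra|]. rewrite IHn; lra. Qed.

Lemma sumN_scal_r n c f : sumN n (fun i => f i * c) = sumN n f * c.
Proof. induction n; simpl; [lra|]. rewrite IHn; lra. Qed.

Lemma sumN_zero n f : (forall i, (i < n)%nat -> f i = 0) -> sumN n f = 0.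
Proof.
  induction n as [|n IH]; simpl; intros H; [reflexivity|].
  rewrite IH, H; [ring|lia|intros; apply H; lia].
Qed.

Lemma sumN_le n f g : (forall i, (i < n)%nat -> f i <= g i) -> sumN n f <= sumN n g.
Proof.
  induction n as [|n IH]; simpl; intros H; [lra|].
  apply Rplus_le_compat; [apply IH; intros; apply H|apply H]; lia.
Qed.

Lemma sumN_nonneg n f : (forall i, (i < n)%nat -> 0 <= f i) -> 0 <= sumN n f.
Proof.
  intros H. rewrite <- (sumN_zero n (fun _ => 0)) by reflexivity. now apply sumN_le.
Qed.

Lemma sumN_split n m f : sumN (n + m) f = sumN n f + sumN m (fun i => f (n + i)%nat).
Proof.
  induction m as [|m IH]; simpl.
  - rewrite Nat.add_0_r; lra.
  - rewrite Nat.add_succ_r. simpl. rewrite IH. lra.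
Qed.

Lemma sumN_swap n m (F : nat -> nat -> R) :
  sumN n (fun i => sumN m (F i)) = sumN m (fun j => sumN n (fun i => F i j)).
Proof.
  induction n as [|n IH]; simpl.
  - symmetry. now apply sumN_zero.
  - rewrite IH, <- sumN_plus. reflexivity.
Qed.

Lemma sumN_single n k f :
  (k < n)%nat -> (forall i, (i < n)%nat -> i <> k -> f i = 0) -> sumN n f = f k.
Proof.
  induction n as [|n IH]; intros Hk H; [lia|]. simpl.
  destruct (Nat.eq_dec k n) as [->|Hne].
  - rewrite sumN_zero; [lra|]. intros; apply H; lia.
  - rewrite IH, (H n) by (try lia; intros; apply H; lia). lra.
Qed.

Lemma sumN_term_le n f k :
  (forall i, (i < n)%nat -> 0 <= f i) -> (k < n)%nat -> f k <= sumN n f.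
Proof.
  induction n as [|n IH]; intros H Hk; [lia|]. simpl.
  assert (0 <= f n) by (apply H; lia).
  destruct (Nat.eq_dec k n) as [->|Hne].
  - assert (0 <= sumN n f) by (apply sumN_nonneg; intros; apply H; lia). lra.
  - assert (f k <= sumN n f) by (apply IH; [intros; apply H|]; lia). lra.
Qed.

Lemma Un_cv_const c : Un_cv (fun _ => c) c.
Proof. intros eps Heps. exists 0%nat. intros. unfold Rdist. now rewrite Rminus_diag, Rabs_R0. Qed.

Lemma sumN_limit n (F : nat -> nat -> R) (L : nat -> R) :
  (forall i, (i < n)%nat -> Un_cv (fun k => F k i) (L i)) ->
  Un_cv (fun k => sumN n (F k)) (sumN n L).
Proof.
  induction n as [|n IH]; simpl; intros H.
  - apply Un_cv_const.
  - apply CV_plus; [apply IH; intros|]; apply H; lia.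
Qed.

Definition vadd (u v : Vec) : Vec := fun i => u i + v i.
Definition vsub (u v : Vec) : Vec := fun i => u i - v i.
Definition vscal (c : R) (u : Vec) : Vec := fun i => c * u i.
Definition ev (k : nat) : Vec := fun i => if Nat.eqb i k then 1 else 0.
Definition vsum (n : nat) (F : nat -> Vec) : Vec := fun i => sumN n (fun j => F j i).

Lemma Rabs_le_sq d a : 0 <= a -> d * d <= a * a -> Rabs d <= a.
Proof. intros Ha H. unfold Rabs; destruct (Rcase_abs d); nra. Qed.

Section Vectors.
Variable N : nat.

Lemma dot_ext u u' v v' :
  (forall i, (i < N)%nat -> u i = u' i) -> (forall i, (i < N)%nat -> v i = v' i) ->
  dot N u v = dot N u' v'.
Proof. intros Hu Hv. apply sumN_ext. intros i Hi. now rewrite Hu, Hv. Qed.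

Lemma dot_sym u v : dot N u v = dot N v u.
Proof. apply sumN_ext. intros; ring. Qed.

Lemma dot_add_l u v w : dot N (vadd u v) w = dot N u w + dot N v w.
Proof. unfold dot, vadd. rewrite <- sumN_plus. apply sumN_ext; intros; ring. Qed.

Lemma dot_add_r u v w : dot N w (vadd u v) = dot N w u + dot N w v.
Proof. unfold dot, vadd. rewrite <- sumN_plus. apply sumN_ext; intros; ring. Qed.

Lemma dot_sub_l u v w : dot N (vsub u v) w = dot N u w - dot N v w.
Proof. unfold dot, vsub. rewrite <- sumN_minus. apply sumN_ext; intros; ring. Qed.

Lemma dot_sub_r u v w : dot N w (vsub u v) = dot N w u - dot N w v.
Proof. unfold dot, vsub. rewrite <- sumN_minus. apply sumN_ext; intros; ring. Qed.

Lemma dot_scal_l c u w : dot N (vscal c u) w = c * dot N u w.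
Proof. unfold dot, vscal. rewrite <- sumN_scal_l. apply sumN_ext; intros; ring. Qed.

Lemma dot_scal_r c u w : dot N w (vscal c u) = c * dot N w u.
Proof. unfold dot, vscal. rewrite <- sumN_scal_l. apply sumN_ext; intros; ring. Qed.

Lemma vsum_ev u : forall i, (i < N)%nat -> u i = vsum N (fun j => vscal (u j) (ev j)) i.
Proof.
  intros i Hi. unfold vsum, vscal, ev. rewrite (sumN_single N i); auto.
  - rewrite Nat.eqb_refl. ring.
  - intros j _ Hj. apply Nat.eqb_neq in Hj. rewrite Nat.eqb_sym, Hj. ring.
Qed.

Lemma dot_ev_l k u : (k < N)%nat -> dot N (ev k) u = u k.
Proof.
  intros Hk. unfold dot, ev. rewrite (sumN_single N k); auto.
  - rewrite Nat.eqb_refl. ring.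
  - intros i _ Hi. apply Nat.eqb_neq in Hi. rewrite Hi. ring.
Qed.

Lemma dot_ev_r k u : (k < N)%nat -> dot N u (ev k) = u k.
Proof. intros Hk. rewrite dot_sym. now apply dot_ev_l. Qed.

Lemma dot_self_nonneg u : 0 <= dot N u u.
Proof. apply sumN_nonneg. intros; nra. Qed.

Lemma dot_self_eq0 u : dot N u u = 0 -> forall i, (i < N)%nat -> u i = 0.
Proof.
  intros H i Hi.
  assert (u i * u i <= dot N u u).
  { apply (sumN_term_le N (fun i => u i * u i)); auto. intros; nra. }
  nra.
Qed.

Lemma nonzero_coords u : ~ Defs.nonzero N u -> forall i, (i < N)%nat -> u i = 0.
Proof.
  intros Hn i Hi. destruct (Req_dec (u i) 0) as [|Hne]; auto.
  exfalso. apply Hn. now exists i.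
Qed.

Lemma dot_self_pos u : Defs.nonzero N u -> 0 < dot N u u.
Proof.
  intros [i [Hi Hu]]. destruct (dot_self_nonneg u) as [|H]; auto.
  exfalso. apply Hu. now apply dot_self_eq0.
Qed.

Lemma dot_neq0_nonzero u v : dot N u v <> 0 -> Defs.nonzero N u.
Proof.
  intros H. apply NNPP. intros Hn. apply H. apply sumN_zero. intros i Hi.
  rewrite (nonzero_coords u Hn i Hi). ring.
Qed.

Lemma dot_sq_le u v : (dot N u v) ^ 2 <= dot N u u * dot N v v.
Proof.
  destruct (dot_self_nonneg v) as [Hv|Hv].
  - set (t := dot N u v / dot N v v).
    pose proof (dot_self_nonneg (vsub u (vscal t v))) as H.
    rewrite dot_sub_l, !dot_sub_r, !dot_scal_l, !dot_scal_r, (dot_sym v u) in H.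
    assert (E : dot N v v * (dot N u u - t * dot N u v - (t * dot N u v - t * (t * dot N v v)))
                = dot N u u * dot N v v - (dot N u v) ^ 2) by (unfold t; field; lra).
    nra.
  - assert (E : dot N u v = 0).
    { apply sumN_zero. intros i Hi. rewrite (dot_self_eq0 v (eq_sym Hv) i Hi). ring. }
    rewrite E, <- Hv. lra.
Qed.

Lemma vnorm_nonneg u : 0 <= vnorm N u.
Proof. apply sqrt_pos. Qed.

Lemma vnorm_sq u : vnorm N u * vnorm N u = dot N u u.
Proof. apply sqrt_sqrt, dot_self_nonneg. Qed.

Lemma vnorm_pos u : Defs.nonzero N u -> 0 < vnorm N u.
Proof. intros H. apply sqrt_lt_R0, dot_self_pos, H. Qed.

Lemma vnorm_ext u v : (forall i, (i < N)%nat -> u i = v i) -> vnorm N u = vnorm N v.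
Proof. intros H. unfold vnorm. f_equal. now apply dot_ext. Qed.

Lemma vnorm_le_sq a u : 0 <= a -> dot N u u <= a * a -> vnorm N u <= a.
Proof. intros Ha H. pose proof (vnorm_sq u). pose proof (vnorm_nonneg u). nra. Qed.

Lemma vnorm_ge_sq a u : 0 <= a -> a * a <= dot N u u -> a <= vnorm N u.
Proof. intros Ha H. pose proof (vnorm_sq u). pose proof (vnorm_nonneg u). nra. Qed.

Lemma Rabs_dot_le u v : Rabs (dot N u v) <= vnorm N u * vnorm N v.
Proof.
  pose proof (vnorm_nonneg u); pose proof (vnorm_nonneg v).
  apply Rabs_le_sq; [nra|].
  replace (vnorm N u * vnorm N v * (vnorm N u * vnorm N v))
    with (vnorm N u * vnorm N u * (vnorm N v * vnorm N v)) by ring.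
  rewrite !vnorm_sq. pose proof (dot_sq_le u v). simpl in *. lra.
Qed.

Lemma vnorm_triang u v : vnorm N (vadd u v) <= vnorm N u + vnorm N v.
Proof.
  pose proof (vnorm_nonneg u); pose proof (vnorm_nonneg v).
  apply vnorm_le_sq; [lra|].
  rewrite dot_add_l, !dot_add_r, (dot_sym v u), <- !vnorm_sq.
  pose proof (Rabs_dot_le u v). pose proof (Rle_abs (dot N u v)). nra.
Qed.

Lemma vnorm_scal c u : vnorm N (vscal c u) = Rabs c * vnorm N u.
Proof.
  unfold vnorm. rewrite dot_scal_l, dot_scal_r, <- Rmult_assoc, <- sqrt_Rsqr_abs.
  apply sqrt_mult_alt, Rle_0_sqr.
Qed.

Lemma vnorm_opp u : vnorm N (vscal (-1) u) = vnorm N u.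
Proof. rewrite vnorm_scal, Rabs_left by lra. ring. Qed.

Lemma vnorm_sub_le u v : vnorm N (vsub u v) <= vnorm N u + vnorm N v.
Proof.
  rewrite (vnorm_ext _ (vadd u (vscal (-1) v))) by (intros; unfold vsub, vadd, vscal; ring).
  rewrite <- (vnorm_opp v). apply vnorm_triang.
Qed.

Lemma vnorm_triang_rev u v : vnorm N u - vnorm N v <= vnorm N (vadd u v).
Proof.
  pose proof (vnorm_sub_le (vadd u v) v) as H.
  rewrite (vnorm_ext (vsub (vadd u v) v) u) in H by (intros; unfold vsub, vadd; ring). lra.
Qed.

Lemma Rabs_coord_le_vnorm u i : (i < N)%nat -> Rabs (u i) <= vnorm N u.
Proof.
  intros Hi. apply Rabs_le_sq; [apply vnorm_nonneg|]. rewrite vnorm_sq.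
  apply (sumN_term_le N (fun i => u i * u i)); auto. intros; nra.
Qed.

Lemma vnorm_le_sum_abs u : vnorm N u <= sumN N (fun i => Rabs (u i)).
Proof.
  assert (Hsq : forall n, sumN n (fun i => u i * u i)
                  <= sumN n (fun i => Rabs (u i)) * sumN n (fun i => Rabs (u i))).
  { induction n as [|n IH]; simpl; [lra|].
    assert (0 <= sumN n (fun i => Rabs (u i))) by (apply sumN_nonneg; intros; apply Rabs_pos).
    pose proof (Rabs_pos (u n)).
    assert (u n * u n = Rabs (u n) * Rabs (u n)) by (rewrite <- Rabs_mult; symmetry; apply Rabs_pos_eq; nra).
    nra. }
  apply vnorm_le_sq; [apply sumN_nonneg; intros; apply Rabs_pos | apply Hsq].
Qed.

Lemma vnorm_vsum_le n F : vnorm N (vsum n F) <= sumN n (fun j => vnorm N (F j)).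
Proof.
  induction n as [|n IH]; simpl.
  - unfold vnorm, dot, vsum. simpl. rewrite sumN_zero, sqrt_0 by (intros; ring). lra.
  - change (vsum (S n) F) with (vadd (vsum n F) (F n)).
    pose proof (vnorm_triang (vsum n F) (F n)). lra.
Qed.

End Vectors.

Definition mvT (N : nat) (A : Mat) (z : Vec) : Vec := fun j => sumN N (fun i => A i j * z i).

Section Matrices.
Variable N : nat.

Lemma mv_add A u v : mv N A (vadd u v) = vadd (mv N A u) (mv N A v).
Proof. extensionality i. unfold mv, vadd. rewrite <- sumN_plus. apply sumN_ext; intros; ring. Qed.

Lemma mv_sub A u v : mv N A (vsub u v) = vsub (mv N A u) (mv N A v).
Proof. extensionality i. unfold mv, vsub. rewrite <- sumN_minus. apply sumN_ext; intros; ring. Qed.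

Lemma mv_scal A c u : mv N A (vscal c u) = vscal c (mv N A u).
Proof. extensionality i. unfold mv, vscal. rewrite <- sumN_scal_l. apply sumN_ext; intros; ring. Qed.

Lemma mv_ext A u v : (forall i, (i < N)%nat -> u i = v i) -> mv N A u = mv N A v.
Proof. intros H. extensionality i. apply sumN_ext. intros j Hj. now rewrite H. Qed.

Lemma mv_zero A u : (forall i, (i < N)%nat -> u i = 0) -> forall i, mv N A u i = 0.
Proof. intros H i. apply sumN_zero. intros j Hj. rewrite H by auto. ring. Qed.

Lemma dot_mv_l A y z : dot N (mv N A y) z = dot N y (mvT N A z).
Proof.
  unfold dot, mv, mvT.
  rewrite (sumN_ext N _ (fun i => sumN N (fun j => A i j * y j * z i)))
    by (intros; symmetry; apply sumN_scal_r).
  rewrite sumN_swap. apply sumN_ext. intros.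
  rewrite <- sumN_scal_l. apply sumN_ext; intros; ring.
Qed.

Lemma dot_mvT_l A z y : dot N (mvT N A z) y = dot N z (mv N A y).
Proof. now rewrite dot_sym, <- dot_mv_l, dot_sym. Qed.

Lemma mv_mm A B y : mv N (mm N A B) y = mv N A (mv N B y).
Proof.
  extensionality i. unfold mv, mm.
  rewrite (sumN_ext N _ (fun j => sumN N (fun l => A i l * B l j * y j)))
    by (intros; symmetry; apply sumN_scal_r).
  rewrite sumN_swap. apply sumN_ext. intros.
  rewrite <- sumN_scal_l. apply sumN_ext; intros; ring.
Qed.

Lemma mv_idm y i : (i < N)%nat -> mv N idm y i = y i.
Proof.
  intros Hi. unfold mv. rewrite (sumN_single N i); auto.
  - unfold idm. rewrite Nat.eqb_refl. ring.
  - intros j _ Hj. unfold idm. apply Nat.eqb_neq in Hj. rewrite Nat.eqb_sym, Hj. ring.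
Qed.

Lemma invertible_mv A : invertible N A -> exists B : Mat,
  (forall y i, (i < N)%nat -> mv N A (mv N B y) i = y i) /\
  (forall y i, (i < N)%nat -> mv N B (mv N A y) i = y i).
Proof.
  intros [B HB]. exists B. split; intros y i Hi;
    rewrite <- mv_mm, <- (mv_idm y i Hi); apply sumN_ext; intros j Hj;
    f_equal; apply HB; auto.
Qed.

Lemma invertible_mv_nonzero A y :
  invertible N A -> Defs.nonzero N y -> Defs.nonzero N (mv N A y).
Proof.
  intros HA [i [Hi Hy]]. destruct (invertible_mv A HA) as [B [_ HBA]].
  apply NNPP. intros Hn. apply Hy. rewrite <- (HBA y i Hi).
  apply mv_zero, nonzero_coords, Hn.
Qed.

End Matrices.

Section ChordalDistance.
Variable N : nat.

Lemma pdist_nonneg z x : 0 <= pdist N z x.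
Proof. apply sqrt_pos. Qed.

Lemma pdist_sq z x : 0 < dot N z z -> 0 < dot N x x ->
  pdist N z x * pdist N z x = 1 - (dot N z x) ^ 2 / (dot N z z * dot N x x).
Proof.
  intros Hz Hx. apply sqrt_sqrt. pose proof (dot_sq_le N z x).
  assert ((dot N z x) ^ 2 / (dot N z z * dot N x x) <= 1).
  { apply Rmult_le_reg_r with (dot N z z * dot N x x); [nra|].
    unfold Rdiv. rewrite Rmult_assoc, Rinv_l by nra. lra. }
  lra.
Qed.

Lemma pdist_ext z z' x x' :
  (forall i, (i < N)%nat -> z i = z' i) -> (forall i, (i < N)%nat -> x i = x' i) ->
  pdist N z x = pdist N z' x'.
Proof.
  intros Hz Hx. unfold pdist.
  now rewrite (dot_ext N z z' x x'), (dot_ext N z z' z z'), (dot_ext N x x' x x').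
Qed.

Lemma pdist_self x : 0 < dot N x x -> pdist N x x = 0.
Proof.
  intros H. unfold pdist.
  replace (1 - dot N x x ^ 2 / (dot N x x * dot N x x)) with 0 by (field; lra).
  apply sqrt_0.
Qed.

Lemma pdist_scal_l c z x : c <> 0 -> pdist N (vscal c z) x = pdist N z x.
Proof.
  intros Hc. unfold pdist. rewrite dot_scal_l, dot_scal_r, dot_scal_l.
  destruct (Req_dec (dot N z z) 0) as [E|E].
  - rewrite E, !Rmult_0_r, !Rmult_0_l. unfold Rdiv. now rewrite Rinv_0, !Rmult_0_r.
  - destruct (Req_dec (dot N x x) 0) as [E2|E2].
    + rewrite E2, !Rmult_0_r. unfold Rdiv. now rewrite Rinv_0, !Rmult_0_r.
    + f_equal. field. auto.
Qed.

Lemma pdist_orth_pos c x : 0 < dot N c c -> 0 < dot N x x -> dot N c x = 0 -> 0 < pdist N c x.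
Proof.
  intros Hc Hx Hcx. pose proof (pdist_sq c x Hc Hx) as E. rewrite Hcx in E.
  replace (1 - 0 ^ 2 / (dot N c c * dot N x x)) with 1 in E by (field; nra).
  pose proof (pdist_nonneg c x). nra.
Qed.

Lemma pdist_mul_vnorm_le z x t : 0 < dot N z z -> 0 < dot N x x ->
  pdist N z x * vnorm N z <= vnorm N (vsub z (vscal t x)).
Proof.
  intros Hz Hx. pose proof (pdist_nonneg z x); pose proof (vnorm_nonneg N z).
  apply vnorm_ge_sq; [nra|].
  replace (pdist N z x * vnorm N z * (pdist N z x * vnorm N z))
    with (pdist N z x * pdist N z x * (vnorm N z * vnorm N z)) by ring.
  rewrite pdist_sq, vnorm_sq by auto.
  rewrite dot_sub_l, !dot_sub_r, !dot_scal_l, !dot_scal_r, (dot_sym N x z).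
  assert (0 <= (t * dot N x x - dot N z x) ^ 2 / dot N x x)
    by (apply Rmult_le_pos; [apply pow2_ge_0 | left; apply Rinv_0_lt_compat; lra]).
  assert (E : (1 - dot N z x ^ 2 / (dot N z z * dot N x x)) * dot N z z
              = dot N z z - t * dot N z x - (t * dot N z x - t * (t * dot N x x))
                - (t * dot N x x - dot N z x) ^ 2 / dot N x x) by (field; lra).
  lra.
Qed.

Lemma vnorm_proj_le_pdist u x : 0 < dot N u u -> 0 < dot N x x ->
  vnorm N (vsub u (vscal (dot N u x / dot N x x) x)) <= pdist N u x * vnorm N u.
Proof.
  intros Hu Hx. pose proof (pdist_nonneg u x); pose proof (vnorm_nonneg N u).
  apply vnorm_le_sq; [nra|].
  replace (pdist N u x * vnorm N u * (pdist N u x * vnorm N u))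
    with (pdist N u x * pdist N u x * (vnorm N u * vnorm N u)) by ring.
  rewrite pdist_sq, vnorm_sq by auto.
  rewrite dot_sub_l, !dot_sub_r, !dot_scal_l, !dot_scal_r, (dot_sym N x u).
  right. field. lra.
Qed.

Lemma pdist_orth_ge z u x : 0 < dot N z z -> 0 < dot N u u -> 0 < dot N x x ->
  dot N z u = 0 -> 1 - pdist N u x * pdist N u x <= pdist N z x * pdist N z x.
Proof.
  intros Hz Hu Hx Hzu. rewrite !pdist_sq by auto.
  set (w := vsub x (vscal (dot N x u / dot N u u) u)).
  assert (Ezw : dot N z x = dot N z w) by (unfold w; rewrite dot_sub_r, dot_scal_r, Hzu; ring).
  assert (Eww : dot N w w = dot N x x - (dot N u x) ^ 2 / dot N u u).
  { unfold w. rewrite dot_sub_l, !dot_sub_r, !dot_scal_l, !dot_scal_r, (dot_sym N u x).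
    field. lra. }
  pose proof (dot_sq_le N z w) as CS. rewrite <- Ezw, Eww in CS.
  enough (dot N z x ^ 2 / (dot N z z * dot N x x) <= 1 - dot N u x ^ 2 / (dot N u u * dot N x x))
    by lra.
  apply Rmult_le_reg_r with (dot N z z * dot N x x); [nra|].
  unfold Rdiv. rewrite Rmult_assoc, Rinv_l by nra.
  replace ((1 - dot N u x ^ 2 * / (dot N u u * dot N x x)) * (dot N z z * dot N x x))
    with (dot N z z * (dot N x x - dot N u x ^ 2 / dot N u u)) by (field; lra).
  lra.
Qed.

Lemma vnorm_proj_coef_ge y y0 : 0 < dot N y y -> 0 < dot N y0 y0 ->
  vnorm N y * (1 - pdist N y y0 * pdist N y y0) <= Rabs (dot N y y0 / dot N y0 y0) * vnorm N y0.
Proof.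
  intros Hy Hy0. set (t := dot N y y0 / dot N y0 y0). set (d := pdist N y y0).
  assert (Hd2 := pdist_sq y y0 Hy Hy0). fold d in Hd2.
  pose proof (vnorm_sq N y) as Ny. pose proof (vnorm_sq N y0) as Ny0.
  pose proof (vnorm_nonneg N y). pose proof (vnorm_nonneg N y0). pose proof (Rabs_pos t).
  (* the component of y along y0 has length |y| sqrt(1 - d^2) >= |y| (1 - d^2) *)
  assert (Ht2 : (Rabs t * vnorm N y0) * (Rabs t * vnorm N y0) = (vnorm N y * vnorm N y) * (1 - d * d)).
  { assert (Htt : Rabs t * Rabs t = t * t) by (rewrite <- Rabs_mult; apply Rabs_pos_eq; nra).
    replace (Rabs t * vnorm N y0 * (Rabs t * vnorm N y0))
      with (Rabs t * Rabs t * (vnorm N y0 * vnorm N y0)) by ring.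
    rewrite Htt, Hd2, Ny, Ny0. unfold t. field. lra. }
  assert (0 <= 1 - d * d) by nra. assert (0 <= d * d) by nra.
  assert ((vnorm N y * (1 - d * d)) * (vnorm N y * (1 - d * d))
          <= (Rabs t * vnorm N y0) * (Rabs t * vnorm N y0)).
  { rewrite Ht2. assert (0 <= vnorm N y * vnorm N y) by nra.
    assert ((1 - d * d) * (1 - d * d) <= 1 - d * d) by nra. nra. }
  assert (0 <= Rabs t * vnorm N y0) by nra. assert (0 <= vnorm N y * (1 - d * d)) by nra. nra.
Qed.

Lemma Rabs_dot_ge_pdist a y y0 : 0 < dot N y y -> 0 < dot N y0 y0 ->
  vnorm N y * ((1 - pdist N y y0 * pdist N y y0) * Rabs (dot N a y0) / vnorm N y0
               - vnorm N a * pdist N y y0)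
  <= Rabs (dot N a y).
Proof.
  intros Hy Hy0. pose proof (vnorm_proj_coef_ge y y0 Hy Hy0) as Ht.
  set (t := dot N y y0 / dot N y0 y0) in *. set (r := vsub y (vscal t y0)).
  set (d := pdist N y y0) in *.
  assert (Hr : vnorm N r <= d * vnorm N y) by (apply vnorm_proj_le_pdist; auto).
  assert (Hny0 : 0 < vnorm N y0) by (apply sqrt_lt_R0; auto).
  pose proof (vnorm_nonneg N a). pose proof (Rabs_pos (dot N a y0)).
  assert (Har : Rabs (dot N a r) <= vnorm N a * (d * vnorm N y)).
  { eapply Rle_trans; [apply Rabs_dot_le|]. apply Rmult_le_compat_l; auto. }
  assert (Hay : Rabs t * Rabs (dot N a y0) - Rabs (dot N a r) <= Rabs (dot N a y)).
  { replace (dot N a y) with (t * dot N a y0 + dot N a r)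
      by (unfold r; rewrite dot_sub_r, dot_scal_r; ring).
    rewrite <- Rabs_mult. pose proof (Rabs_triang_inv (t * dot N a y0) (- dot N a r)) as Tr.
    rewrite Rabs_Ropp in Tr. replace (t * dot N a y0 - - dot N a r) with (t * dot N a y0 + dot N a r)
      in Tr by ring. lra. }
  assert (vnorm N y * (1 - d * d) * Rabs (dot N a y0) / vnorm N y0 <= Rabs t * Rabs (dot N a y0)).
  { apply Rmult_le_reg_r with (vnorm N y0); auto. unfold Rdiv.
    rewrite Rmult_assoc, Rinv_l by lra. nra. }
  replace (vnorm N y * ((1 - d * d) * Rabs (dot N a y0) / vnorm N y0 - vnorm N a * d))
    with (vnorm N y * (1 - d * d) * Rabs (dot N a y0) / vnorm N y0 - vnorm N a * (d * vnorm N y))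
    by (field; lra).
  lra.
Qed.

Lemma chart_ratio_locally_bounded a y0 : 0 < dot N y0 y0 -> dot N a y0 <> 0 ->
  exists c dl, 0 < c /\ 0 < dl /\
    forall y, 0 < dot N y y -> pdist N y y0 < dl -> c * vnorm N y <= Rabs (dot N a y).
Proof.
  intros Hy0 Ha.
  assert (Hny0 : 0 < vnorm N y0) by (apply sqrt_lt_R0; auto).
  set (L := Rabs (dot N a y0) / vnorm N y0).
  assert (HL : 0 < L) by (apply Rdiv_lt_0_compat; auto; apply Rabs_pos_lt; auto).
  pose proof (vnorm_nonneg N a) as Hna.
  exists (L / 2), (Rmin (1/2) (L / (4 * (vnorm N a + 1)))).
  split; [lra|]. split; [apply Rmin_pos; [lra | apply Rdiv_lt_0_compat; lra]|].
  intros y Hy Hd. pose proof (Rabs_dot_ge_pdist a y y0 Hy Hy0) as Hlow.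
  assert (Hny : 0 < vnorm N y) by (apply sqrt_lt_R0; auto).
  pose proof (pdist_nonneg y y0) as Hd0. set (d := pdist N y y0) in *.
  assert (Hd12 : d <= 1/2) by (pose proof (Rmin_l (1/2) (L / (4 * (vnorm N a + 1)))); lra).
  assert (Had : vnorm N a * d <= L / 4).
  { assert (d <= L / (4 * (vnorm N a + 1))) by (pose proof (Rmin_r (1/2) (L / (4 * (vnorm N a + 1)))); lra).
    apply Rle_trans with (vnorm N a * (L / (4 * (vnorm N a + 1)))); [apply Rmult_le_compat_l; lra|].
    apply Rmult_le_reg_r with (4 * (vnorm N a + 1)); [lra|].
    replace (vnorm N a * (L / (4 * (vnorm N a + 1))) * (4 * (vnorm N a + 1))) with (vnorm N a * L)
      by (field; lra). nra. }
  assert (Hin : L / 2 <= (1 - d * d) * Rabs (dot N a y0) / vnorm N y0 - vnorm N a * d).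
  { replace ((1 - d * d) * Rabs (dot N a y0) / vnorm N y0) with ((1 - d * d) * L) by (unfold L; field; lra).
    assert (d * d <= 1/4) by nra. nra. }
  eapply Rle_trans; [|exact Hlow]. rewrite Rmult_comm. apply Rmult_le_compat_l; lra.
Qed.

Lemma pdist_line_le x v s : 0 < dot N x x -> dot N x v = 0 ->
  pdist N (vsub x (vscal s v)) x * vnorm N x <= Rabs s * vnorm N v.
Proof.
  intros Hx Hxv. set (y := vsub x (vscal s v)).
  assert (Hyy : dot N y y = dot N x x + s * s * dot N v v).
  { unfold y. rewrite dot_sub_l, !dot_sub_r, !dot_scal_l, !dot_scal_r, (dot_sym N v x), Hxv. ring. }
  pose proof (dot_self_nonneg N v).
  assert (Hy : 0 < dot N y y) by nra.
  assert (Hxy : vnorm N x <= vnorm N y) by (apply sqrt_le_1_alt; nra).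
  pose proof (pdist_mul_vnorm_le y x 1 Hy Hx) as Hp.
  rewrite (vnorm_ext N (vsub y (vscal 1 x)) (vscal (- s) v)), vnorm_scal, Rabs_Ropp in Hp
    by (intros; unfold y, vsub, vscal; ring).
  pose proof (pdist_nonneg y x). nra.
Qed.

End ChordalDistance.

Definition null_seq (f : nat -> R) : Prop :=
  forall eps, 0 < eps -> exists k0, forall k, (k0 <= k)%nat -> Rabs (f k) < eps.

Definition ev_bounded (f : nat -> R) : Prop :=
  exists C k0, forall k, (k0 <= k)%nat -> Rabs (f k) <= C.

Lemma null_seq_Un_cv f : null_seq f <-> Un_cv f 0.
Proof.
  unfold Un_cv, Rdist. setoid_rewrite Rminus_0_r.
  split; intros H eps Heps; destruct (H eps Heps) as [k0 Hk]; exists k0; intros k ?; apply Hk; lia.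
Qed.

Lemma null_seq_le f g :
  null_seq g -> (exists k0, forall k, (k0 <= k)%nat -> Rabs (f k) <= g k) -> null_seq f.
Proof.
  intros Hg [k1 H] eps Heps. destruct (Hg eps Heps) as [k0 Hk]. exists (max k0 k1).
  intros k ?. specialize (H k ltac:(lia)). specialize (Hk k ltac:(lia)).
  pose proof (Rle_abs (g k)). lra.
Qed.

Lemma ev_bounded_le f g :
  ev_bounded g -> (exists k0, forall k, (k0 <= k)%nat -> Rabs (f k) <= g k) -> ev_bounded f.
Proof.
  intros [C [k1 Hg]] [k0 H]. exists C, (max k0 k1). intros k ?.
  specialize (H k ltac:(lia)). specialize (Hg k ltac:(lia)). pose proof (Rle_abs (g k)). lra.
Qed.

Lemma null_seq_plus f g : null_seq f -> null_seq g -> null_seq (fun k => f k + g k).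
Proof.
  intros Hf Hg eps Heps.
  destruct (Hf (eps / 2)) as [k0 H0]; [lra|]. destruct (Hg (eps / 2)) as [k1 H1]; [lra|].
  exists (max k0 k1). intros k ?. eapply Rle_lt_trans; [apply Rabs_triang|].
  specialize (H0 k ltac:(lia)). specialize (H1 k ltac:(lia)). lra.
Qed.

Lemma null_seq_mult f g : null_seq f -> ev_bounded g -> null_seq (fun k => f k * g k).
Proof.
  intros Hf [C [k1 Hg]] eps Heps.
  assert (HC : 0 < Rabs C + 1) by (pose proof (Rabs_pos C); lra).
  destruct (Hf (eps / (Rabs C + 1))) as [k0 H0]; [apply Rdiv_lt_0_compat; lra|].
  exists (max k0 k1). intros k ?. rewrite Rabs_mult.
  specialize (H0 k ltac:(lia)). specialize (Hg k ltac:(lia)).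
  pose proof (Rle_abs C). pose proof (Rabs_pos (f k)). pose proof (Rabs_pos (g k)).
  apply Rle_lt_trans with (Rabs (f k) * (Rabs C + 1)); [nra|].
  replace eps with (eps / (Rabs C + 1) * (Rabs C + 1)) by (field; lra). nra.
Qed.

Lemma ev_bounded_const c : ev_bounded (fun _ => c).
Proof. exists (Rabs c), 0%nat. intros; lra. Qed.

Lemma null_seq_abs f : null_seq f -> null_seq (fun k => Rabs (f k)).
Proof.
  intros H eps Heps. destruct (H eps Heps) as [k0 Hk]. exists k0. intros. rewrite Rabs_Rabsolu. auto.
Qed.

Lemma null_seq_scal c f : null_seq f -> null_seq (fun k => c * f k).
Proof.
  intros H. apply (null_seq_le _ _ (null_seq_abs _ (null_seq_mult _ _ H (ev_bounded_const c)))).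
  exists 0%nat. intros. rewrite Rmult_comm. lra.
Qed.

Lemma null_seq_sumN n (F : nat -> nat -> R) :
  (forall j, (j < n)%nat -> null_seq (fun k => F k j)) -> null_seq (fun k => sumN n (F k)).
Proof.
  induction n as [|n IH]; simpl; intros H.
  - intros eps Heps. exists 0%nat. intros. rewrite Rabs_R0. auto.
  - apply (null_seq_plus (fun k => sumN n (F k)) (fun k => F k n)); [apply IH; intros|]; apply H; lia.
Qed.

Lemma null_seq_ev_bounded f : null_seq f -> ev_bounded f.
Proof. intros H. destruct (H 1) as [k0 Hk]; [lra|]. exists 1, k0. intros. left; auto. Qed.

Lemma ev_bounded_plus f g : ev_bounded f -> ev_bounded g -> ev_bounded (fun k => f k + g k).
Proof.
  intros [C1 [k1 H1]] [C2 [k2 H2]]. exists (C1 + C2), (max k1 k2). intros k ?.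
  eapply Rle_trans; [apply Rabs_triang|]. specialize (H1 k ltac:(lia)). specialize (H2 k ltac:(lia)). lra.
Qed.

Lemma ev_bounded_mult f g : ev_bounded f -> ev_bounded g -> ev_bounded (fun k => f k * g k).
Proof.
  intros [C1 [k1 H1]] [C2 [k2 H2]]. exists (C1 * C2), (max k1 k2). intros k ?.
  rewrite Rabs_mult. specialize (H1 k ltac:(lia)). specialize (H2 k ltac:(lia)).
  apply Rmult_le_compat; auto using Rabs_pos.
Qed.

Lemma ev_bounded_scal c f : ev_bounded f -> ev_bounded (fun k => c * f k).
Proof. apply ev_bounded_mult, ev_bounded_const. Qed.

Lemma ev_bounded_abs f : ev_bounded f -> ev_bounded (fun k => Rabs (f k)).
Proof. intros [C [k0 H]]. exists C, k0. intros. rewrite Rabs_Rabsolu. auto. Qed.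

Lemma ev_bounded_sumN n (F : nat -> nat -> R) :
  (forall j, (j < n)%nat -> ev_bounded (fun k => F k j)) -> ev_bounded (fun k => sumN n (F k)).
Proof.
  induction n as [|n IH]; simpl; intros H.
  - apply ev_bounded_const.
  - apply (ev_bounded_plus (fun k => sumN n (F k)) (fun k => F k n)); [apply IH; intros|]; apply H; lia.
Qed.

Lemma strict_incr_ge phi : strict_incr phi -> forall k, (k <= phi k)%nat.
Proof. intros H k. induction k; [lia|]. specialize (H k). lia. Qed.

Lemma strict_incr_lt phi : strict_incr phi -> forall a b, (a < b)%nat -> (phi a < phi b)%nat.
Proof. intros H a b Hab. induction Hab; [apply H|]. specialize (H m). lia. Qed.

Lemma strict_incr_comp phi psi : strict_incr phi -> strict_incr psi -> strict_incr (fun k => phi (psi k)).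
Proof. intros H1 H2 k. apply strict_incr_lt; auto. Qed.

Lemma Un_cv_subseq f l phi : strict_incr phi -> Un_cv f l -> Un_cv (fun k => f (phi k)) l.
Proof.
  intros Hp H eps Heps. destruct (H eps Heps) as [k0 Hk]. exists k0. intros k ?.
  apply Hk. pose proof (strict_incr_ge phi Hp k). lia.
Qed.

Lemma null_seq_subseq f phi : strict_incr phi -> null_seq f -> null_seq (fun k => f (phi k)).
Proof. intros Hp. rewrite !null_seq_Un_cv. now apply Un_cv_subseq. Qed.

Lemma ev_bounded_subseq f phi : strict_incr phi -> ev_bounded f -> ev_bounded (fun k => f (phi k)).
Proof.
  intros Hp [C [k0 H]]. exists C, k0. intros k ?. apply H.
  pose proof (strict_incr_ge phi Hp k). lia.
Qed.

Lemma inv_INR_succ_lt eps : 0 < eps -> exists m, forall k, (m <= k)%nat -> / (INR k + 1) < eps.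
Proof.
  intros Heps. destruct (INR_unbounded (/ eps)) as [M HM]. exists M. intros k ?.
  assert (INR M <= INR k) by (apply le_INR; lia). assert (0 < / eps) by (apply Rinv_0_lt_compat; lra).
  rewrite <- (Rinv_inv eps). apply Rinv_lt_contravar; nra.
Qed.

Lemma strict_incr_choice {A : Type} (Q : nat -> nat -> A -> Prop) :
  (forall j k0, exists k a, (k0 <= k)%nat /\ Q j k a) ->
  exists (kk : nat -> nat) (aa : nat -> A), strict_incr kk /\ forall j, Q j (kk j) (aa j).
Proof.
  intros H.
  assert (H' : forall jk : nat * nat, exists ka : nat * A,
             (snd jk <= fst ka)%nat /\ Q (fst jk) (fst ka) (snd ka)).
  { intros [j k0]. destruct (H j k0) as [k [a Hka]]. now exists (k, a). }
  apply choice in H'. destruct H' as [pick Hpick].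
  set (st := fix st j := match j with
                         | O => pick (O, O)
                         | S j' => pick (S j', S (fst (st j'))) end).
  exists (fun j => fst (st j)), (fun j => snd (st j)). split.
  - intros j. exact (proj1 (Hpick (S j, S (fst (st j))))).
  - intros [|j]; [exact (proj2 (Hpick (0, 0)%nat)) | exact (proj2 (Hpick (S j, S (fst (st j)))))].
Qed.

Lemma ev_bounded_cv_subseq f : ev_bounded f -> exists phi l, strict_incr phi /\ Un_cv (fun k => f (phi k)) l.
Proof.
  intros [C [k0 H]].
  set (h := fun k => f (k + k0)%nat).
  destruct (Bolzano_Weierstrass h (fun c => -C <= c <= C) (compact_P3 (-C) C)) as [l Hl].
  { intros n. pose proof (H (n + k0)%nat ltac:(lia)) as Hn. unfold h, Rabs in *.
    destruct (Rcase_abs (f (n + k0)%nat)); lra. }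
  destruct (strict_incr_choice (fun m p (_ : unit) => Rabs (h p - l) < / (INR m + 1)))
    as [psi [_ [Hinc Hpsi]]].
  { intros m n0.
    assert (Hpos : 0 < / (INR m + 1)) by (apply Rinv_0_lt_compat; pose proof (pos_INR m); lra).
    destruct (Hl (disc l (mkposreal _ Hpos)) n0) as [p [Hp1 Hp2]].
    - exists (mkposreal _ Hpos). intros y Hy. exact Hy.
    - now exists p, tt. }
  exists (fun k => (psi k + k0)%nat), l. split.
  - intros k. specialize (Hinc k). lia.
  - intros eps Heps. destruct (inv_INR_succ_lt eps Heps) as [M HM]. exists M. intros k ?.
    eapply Rlt_trans; [apply (Hpsi k)| auto].
Qed.

Lemma ev_bounded_coords_cv_subseq n (a : nat -> Vec) :
  (forall i, (i < n)%nat -> ev_bounded (fun k => a k i)) ->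
  exists phi l, strict_incr phi /\ forall i, (i < n)%nat -> Un_cv (fun k => a (phi k) i) (l i).
Proof.
  induction n as [|n IH]; intros H.
  - exists (fun k => k), (fun _ => 0). split; [intros k; lia | intros; lia].
  - destruct IH as [phi [l [Hphi Hl]]]; [intros; apply H; lia|].
    destruct (ev_bounded_cv_subseq (fun k => a (phi k) n)) as [psi [ln [Hpsi Hln]]].
    { apply (ev_bounded_subseq (fun k => a k n)); auto. }
    exists (fun k => phi (psi k)), (fun i => if Nat.eqb i n then ln else l i). split.
    + now apply strict_incr_comp.
    + intros i Hi. destruct (Nat.eqb_spec i n) as [->|Hne]; auto.
      apply (Un_cv_subseq (fun k => a (phi k) i)); auto. apply Hl. lia.
Qed.

Lemma dot_cv N (u v : nat -> Vec) (u0 v0 : Vec) :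
  (forall i, (i < N)%nat -> Un_cv (fun k => u k i) (u0 i)) ->
  (forall i, (i < N)%nat -> Un_cv (fun k => v k i) (v0 i)) ->
  Un_cv (fun k => dot N (u k) (v k)) (dot N u0 v0).
Proof. intros Hu Hv. apply sumN_limit. intros i Hi. apply CV_mult; auto. Qed.

Lemma strict_incr_extend {A : Type} (kk : nat -> nat) (ys : nat -> A) (d0 : A) :
  strict_incr kk ->
  exists xs : nat -> A, (forall j, xs (kk j) = ys j) /\ (forall k, (forall j, kk j <> k) -> xs k = d0).
Proof.
  intros Hkk.
  assert (Hinj : forall i j, kk i = kk j -> i = j).
  { intros i j E. destruct (Nat.lt_total i j) as [Hl|[Hl|Hl]]; auto;
      pose proof (strict_incr_lt kk Hkk _ _ Hl); lia. }
  destruct (choice (fun k a => (forall j, kk j = k -> a = ys j) /\ ((forall j, kk j <> k) -> a = d0)))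
    as [xs Hxs].
  - intros k. destruct (classic (exists j, kk j = k)) as [[j Hj]|Hn].
    + exists (ys j). split.
      * intros j' Hj'. f_equal. apply Hinj. congruence.
      * intros Hne. exfalso. exact (Hne j Hj).
    + exists d0. split; auto. intros j Hj. exfalso. apply Hn. now exists j.
  - exists xs. split; intros; apply Hxs; auto.
Qed.

Lemma seq_cv_uniform {A : Type} (P : A -> Prop) (d : A -> A -> R) (f : nat -> A -> A) (x : A) :
  P x -> d x x = 0 -> (forall y z, 0 <= d y z) ->
  (forall xs, (forall k, P (xs k)) -> Un_cv (fun k => d (xs k) x) 0 ->
     Un_cv (fun k => d (f k (xs k)) x) 0) ->
  forall eps, 0 < eps -> exists del k0, 0 < del /\
    forall k y, (k0 <= k)%nat -> P y -> d y x < del -> d (f k y) x < eps.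
Proof.
  intros Px Hxx Hd Hf eps Heps. apply NNPP. intros Hn.
  destruct (strict_incr_choice
              (fun j k y => P y /\ d y x < / (INR j + 1) /\ eps <= d (f k y) x)) as [kk [yy [Hkk Hst]]].
  { intros j k0. apply NNPP. intros Hj. apply Hn. exists (/ (INR j + 1)), k0. split.
    - apply Rinv_0_lt_compat. pose proof (pos_INR j). lra.
    - intros k y Hk Py Hy. apply Rnot_le_lt. intros Hle. apply Hj. now exists k, y. }
  destruct (strict_incr_extend kk yy x Hkk) as [xs [Hxs Hxs0]].
  assert (Hpts : forall k, P (xs k)).
  { intros k. destruct (classic (exists j, kk j = k)) as [[j <-]|Hnk].
    - rewrite Hxs. apply Hst.
    - rewrite Hxs0; auto. intros j Hj. apply Hnk. now exists j. }
  assert (Hcv : Un_cv (fun k => d (xs k) x) 0).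
  { intros e He. destruct (inv_INR_succ_lt e He) as [J HJ]. exists (S (kk J)). intros k Hk.
    unfold Rdist. rewrite Rminus_0_r, Rabs_pos_eq by apply Hd.
    destruct (classic (exists j, kk j = k)) as [[j <-]|Hnk].
    - rewrite Hxs. assert (J < j)%nat.
      { destruct (Nat.lt_ge_cases J j) as [|Hle]; auto.
        destruct (Nat.eq_dec j J) as [->|Hne]; [lia|].
        pose proof (strict_incr_lt kk Hkk j J ltac:(lia)). lia. }
      eapply Rlt_trans; [apply Hst | apply HJ; lia].
    - rewrite Hxs0, Hxx; auto. intros j Hj. apply Hnk. now exists j. }
  destruct (Hf xs Hpts Hcv eps Heps) as [k0 Hk0].
  specialize (Hk0 (kk k0) (strict_incr_ge kk Hkk k0)). unfold Rdist in Hk0.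
  rewrite Rminus_0_r, Rabs_pos_eq, Hxs in Hk0 by apply Hd.
  pose proof (proj2 (proj2 (Hst k0))). lra.
Qed.

Lemma ln_rate_null (f T : nat -> R) :
  (forall k, 0 < T k) -> cv_infty T -> (forall k, 0 <= f k) ->
  Un_cv (fun k => / T k * ln (f k)) (-1) -> null_seq f.
Proof.
  intros HT HTi Hf Hrate e He.
  destruct (Hrate (1/2)) as [k0 Hk0]; [lra|].
  destruct (HTi (- 2 * ln e)) as [k1 Hk1].
  exists (max k0 k1). intros k Hk. specialize (Hk0 k ltac:(lia)). specialize (Hk1 k ltac:(lia)).
  specialize (HT k). rewrite Rabs_pos_eq by auto.
  unfold Rdist in Hk0. apply Rabs_def2 in Hk0. destruct Hk0 as [Hk0 _].
  assert (Hln : ln (f k) < - T k / 2).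
  { apply Rmult_lt_reg_l with (/ T k); [apply Rinv_0_lt_compat; auto|].
    replace (/ T k * (- T k / 2)) with (-1/2) by (field; lra). lra. }
  destruct (Rle_lt_dec (f k) 0) as [Hf0|Hf0]; [specialize (Hf k); lra|].
  apply ln_lt_inv; auto. lra.
Qed.

Section NormalizedAction.
Variable N : nat.
Variable g : nat -> Mat.
Variable x : Vec.
Hypothesis Hinv : forall k, invertible N (g k).
Hypothesis Hx : 0 < dot N x x.

(* G_k = gmv k, u_k = gxu k, F_k = gperp k, a_k = gform k *)
Definition gx_norm k := vnorm N (mv N (g k) x).
Definition gmv k y := vscal (/ gx_norm k) (mv N (g k) y).
Definition gxu k := gmv k x.
Definition gperp k y := vsub (gmv k y) (vscal (dot N (gxu k) (gmv k y)) (gxu k)).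
Definition gform k := vscal (/ gx_norm k) (mvT N (g k) (gxu k)).
Definition gperp_size k := sumN N (fun j => vnorm N (gperp k (ev j))).

Lemma gx_norm_pos k : 0 < gx_norm k.
Proof.
  apply vnorm_pos, invertible_mv_nonzero; auto.
  apply (dot_neq0_nonzero N x x). lra.
Qed.

Lemma dot_gxu_self k : dot N (gxu k) (gxu k) = 1.
Proof.
  unfold gxu, gmv. rewrite dot_scal_l, dot_scal_r, <- vnorm_sq. fold (gx_norm k).
  pose proof (gx_norm_pos k). field. lra.
Qed.

Lemma vnorm_gxu k : vnorm N (gxu k) = 1.
Proof. unfold vnorm. rewrite dot_gxu_self. apply sqrt_1. Qed.

Lemma gmv_add k y z : gmv k (vadd y z) = vadd (gmv k y) (gmv k z).
Proof. unfold gmv. rewrite mv_add. extensionality i. unfold vscal, vadd. ring. Qed.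

Lemma gmv_scal k c y : gmv k (vscal c y) = vscal c (gmv k y).
Proof. unfold gmv. rewrite mv_scal. extensionality i. unfold vscal. ring. Qed.

Lemma gmv_ext k y z : (forall i, (i < N)%nat -> y i = z i) -> gmv k y = gmv k z.
Proof. intros H. unfold gmv. now rewrite (mv_ext N (g k) y z H). Qed.

Lemma dot_gxu_gmv_scal_x k t : dot N (gxu k) (gmv k (vscal t x)) = t.
Proof. rewrite gmv_scal, dot_scal_r. fold (gxu k). rewrite dot_gxu_self. ring. Qed.

Lemma dot_gform k y : dot N (gform k) y = dot N (gxu k) (gmv k y).
Proof.
  unfold gform, gmv. rewrite dot_scal_l, dot_scal_r, dot_mvT_l. reflexivity.
Qed.

Lemma gmv_decomp k y : gmv k y = vadd (vscal (dot N (gform k) y) (gxu k)) (gperp k y).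
Proof. unfold gperp. rewrite dot_gform. extensionality i. unfold vadd, vsub, vscal. ring. Qed.

Lemma vnorm_gmv_le k y : vnorm N (gmv k y) <= Rabs (dot N (gxu k) (gmv k y)) + vnorm N (gperp k y).
Proof.
  rewrite gmv_decomp at 1. rewrite dot_gform.
  eapply Rle_trans; [apply vnorm_triang|]. rewrite vnorm_scal, vnorm_gxu. lra.
Qed.

Lemma dot_gperp_gxu k y : dot N (gperp k y) (gxu k) = 0.
Proof. unfold gperp. rewrite dot_sub_l, dot_scal_l, dot_gxu_self, dot_sym. ring. Qed.

Lemma gperp_add k y z : gperp k (vadd y z) = vadd (gperp k y) (gperp k z).
Proof. unfold gperp. rewrite gmv_add, dot_add_r. extensionality i. unfold vsub, vadd, vscal. ring. Qed.

Lemma gperp_scal k c y : gperp k (vscal c y) = vscal c (gperp k y).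
Proof. unfold gperp. rewrite gmv_scal, dot_scal_r. extensionality i. unfold vsub, vscal. ring. Qed.

Lemma gperp_ext k y z : (forall i, (i < N)%nat -> y i = z i) -> gperp k y = gperp k z.
Proof. intros H. unfold gperp. now rewrite (gmv_ext k y z H). Qed.

Lemma gperp_shift k y t : gperp k (vadd y (vscal t x)) = gperp k y.
Proof.
  unfold gperp. rewrite gmv_add, dot_add_r, dot_gxu_gmv_scal_x, gmv_scal. fold (gxu k).
  extensionality i. unfold vsub, vadd, vscal. ring.
Qed.

Lemma gperp_null k y : (forall i, (i < N)%nat -> y i = 0) -> vnorm N (gperp k y) = 0.
Proof.
  intros H. rewrite (gperp_ext k y (vscal 0 y)) by (intros; unfold vscal; rewrite H; auto; ring).
  rewrite gperp_scal, vnorm_scal, Rabs_R0. ring.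
Qed.

Lemma gperp_vsum k n F : gperp k (vsum n F) = vsum n (fun j => gperp k (F j)).
Proof.
  induction n as [|n IH].
  - rewrite (gperp_ext k (vsum 0 F) (vscal 0 (vsum 0 F))) by (intros; unfold vscal, vsum; simpl; ring).
    rewrite gperp_scal.
    extensionality i. unfold vscal, vsum. simpl. ring.
  - change (vsum (S n) F) with (vadd (vsum n F) (F n)). now rewrite gperp_add, IH.
Qed.

Lemma vnorm_gperp_le k y : vnorm N (gperp k y) <= vnorm N y * gperp_size k.
Proof.
  rewrite (gperp_ext k y _ (vsum_ev N y)), gperp_vsum.
  eapply Rle_trans; [apply vnorm_vsum_le|]. unfold gperp_size. rewrite <- sumN_scal_l.
  apply sumN_le. intros j Hj. rewrite gperp_scal, vnorm_scal.
  apply Rmult_le_compat_r; [apply vnorm_nonneg | now apply Rabs_coord_le_vnorm].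
Qed.

Lemma dnorm_gperp k v : dnorm N (g k) x v = vnorm N (gperp k v).
Proof.
  unfold dnorm, gperp, gxu, gmv. fold (gx_norm k). pose proof (gx_norm_pos k).
  rewrite !dot_scal_l, !dot_scal_r.
  set (Av := mv N (g k) v). set (Ax := mv N (g k) x).
  assert (Hc : dot N Ax Ax = gx_norm k * gx_norm k) by (unfold gx_norm; now rewrite vnorm_sq).
  set (w := fun i => Av i - dot N Av Ax / dot N Ax Ax * Ax i).
  rewrite (vnorm_ext N (vsub _ _) (vscal (/ gx_norm k) w))
    by (intros; unfold w, vsub, vscal; rewrite Hc, (dot_sym N Ax Av); field; lra).
  rewrite vnorm_scal, Rabs_pos_eq by (left; apply Rinv_0_lt_compat; lra).
  unfold Rdiv. fold Ax. fold (gx_norm k). ring.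
Qed.

Lemma mv_line_gperp k v :
  dot N (gxu k) (gmv k v) <> 0 ->
  mv N (g k) (vsub x (vscal (/ dot N (gxu k) (gmv k v)) v))
  = vscal (- gx_norm k / dot N (gxu k) (gmv k v)) (gperp k v).
Proof.
  intros Hmu. set (mu := dot N (gxu k) (gmv k v)) in *.
  rewrite mv_sub, mv_scal. unfold gperp. fold mu. unfold gxu, gmv.
  pose proof (gx_norm_pos k). extensionality i. unfold vsub, vscal. field. split; lra.
Qed.

Lemma pdist_mv_line_ge k v : dot N (gxu k) (gmv k v) <> 0 ->
  Defs.nonzero N (vsub x (vscal (/ dot N (gxu k) (gmv k v)) v)) -> pdist N (gxu k) x < 1/2 ->
  1/2 <= pdist N (mv N (g k) (vsub x (vscal (/ dot N (gxu k) (gmv k v)) v))) x.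
Proof.
  intros Hmu Hy Hu. pose proof (invertible_mv_nonzero N (g k) _ (Hinv k) Hy) as Hgy.
  rewrite mv_line_gperp in Hgy |- * by auto. set (mu := dot N (gxu k) (gmv k v)) in *.
  assert (Hc : - gx_norm k / mu <> 0).
  { pose proof (gx_norm_pos k). unfold Rdiv. apply Rmult_integral_contrapositive.
    split; [lra | now apply Rinv_neq_0_compat]. }
  rewrite pdist_scal_l by auto.
  assert (HF : 0 < dot N (gperp k v) (gperp k v)).
  { apply dot_self_pos. destruct Hgy as [i [Hi Hne]]. exists i. split; auto.
    intros Z. apply Hne. unfold vscal. rewrite Z. ring. }
  pose proof (pdist_orth_ge N (gperp k v) (gxu k) x HF ltac:(rewrite dot_gxu_self; lra) Hx
                (dot_gperp_gxu k v)).
  pose proof (pdist_nonneg N (gxu k) x). pose proof (pdist_nonneg N (gperp k v) x). nra.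
Qed.

End NormalizedAction.

Lemma coords_cv_vnorm_null N (u : nat -> Vec) (u0 : Vec) :
  (forall i, (i < N)%nat -> Un_cv (fun k => u k i) (u0 i)) ->
  null_seq (fun k => vnorm N (vsub (u k) u0)).
Proof.
  intros H. apply (null_seq_le _ (fun k => sumN N (fun i => Rabs (u k i - u0 i)))).
  - apply null_seq_sumN. intros i Hi. apply null_seq_abs, null_seq_Un_cv.
    intros eps Heps. destruct (H i Hi eps Heps) as [k0 Hk]. exists k0. intros k ?.
    unfold Rdist. rewrite Rminus_0_r. apply Hk. lia.
  - exists 0%nat. intros k _. rewrite Rabs_pos_eq by apply vnorm_nonneg. apply vnorm_le_sum_abs.
Qed.

Lemma vnorm_cv_ev_bounded N (u : nat -> Vec) (u0 : Vec) :
  null_seq (fun k => vnorm N (vsub (u k) u0)) -> ev_bounded (fun k => vnorm N (u k)).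
Proof.
  intros H.
  apply (ev_bounded_le _ _ (ev_bounded_plus _ _ (null_seq_ev_bounded _ H) (ev_bounded_const (vnorm N u0)))).
  exists 0%nat. intros k _. rewrite Rabs_pos_eq by apply vnorm_nonneg.
  rewrite (vnorm_ext N (u k) (vadd (vsub (u k) u0) u0)) by (intros; unfold vadd, vsub; ring).
  apply vnorm_triang.
Qed.

Lemma compact_chart_lower_bound X (K : Vec -> Prop) (a : Vec) :
  compactX X K -> (forall y, K y -> dot (mdim X) a y <> 0) ->
  exists c, 0 < c /\ forall y, K y -> c * vnorm (mdim X) y <= Rabs (dot (mdim X) a y).
Proof.
  set (N := mdim X). intros [Hpt Hseq] Ha.
  assert (Hnz : forall y, K y -> 0 < dot N y y) by (intros y Ky; apply dot_self_pos, (Hpt y Ky)).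
  apply NNPP. intros Hn.
  assert (Hm : forall m : nat, exists y, K y /\ Rabs (dot N a y) < / (INR m + 1) * vnorm N y).
  { intros m. apply NNPP. intros Hm. apply Hn. exists (/ (INR m + 1)). split.
    - apply Rinv_0_lt_compat. pose proof (pos_INR m). lra.
    - intros y Ky. apply Rnot_lt_le. intros Hlt. apply Hm. now exists y. }
  apply choice in Hm. destruct Hm as [ys Hys].
  destruct (Hseq ys (fun m => proj1 (Hys m))) as [psi [y0 [Hpsi [Ky0 Hcv]]]].
  destruct (chart_ratio_locally_bounded N a y0 (Hnz y0 Ky0) (Ha y0 Ky0)) as [c [dl [Hc [Hdl Hnear]]]].
  destruct (Hcv dl Hdl) as [m0 Hm0]. destruct (inv_INR_succ_lt c Hc) as [m1 Hm1].
  pose proof (strict_incr_ge psi Hpsi (max m0 m1)).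
  specialize (Hm0 (max m0 m1) ltac:(lia)). specialize (Hm1 (psi (max m0 m1)) ltac:(lia)).
  set (m := max m0 m1) in *. unfold Rdist in Hm0.
  rewrite Rminus_0_r, Rabs_pos_eq in Hm0 by apply pdist_nonneg.
  destruct (Hys (psi m)) as [Kym Hym]. set (y := ys (psi m)) in *.
  assert (Hy := Hnz y Kym). assert (Hny : 0 < vnorm N y) by (apply sqrt_lt_R0; auto).
  specialize (Hnear y Hy Hm0).
  assert (c * vnorm N y < / (INR (psi m) + 1) * vnorm N y) by lra.
  assert (c < / (INR (psi m) + 1)) by (apply Rmult_lt_reg_r with (vnorm N y); auto).
  lra.
Qed.

Lemma hconv_point_image X (K : Vec -> Prop) (h : nat -> Vec -> Vec) (x : Vec) (b : nat -> R) :
  (exists y, K y) -> null_seq b ->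
  (exists k0, forall k y, (k0 <= k)%nat -> K y -> pdist (mdim X) (h k y) x <= b k) ->
  hconv_point X (fun k z => exists y, K y /\ z = h k y) x.
Proof.
  intros [y0 Ky0] Hb [k0 Hk] eps Heps. destruct (Hb eps Heps) as [k1 Hk1].
  assert (Hall : forall k y, (max k0 k1 <= k)%nat -> K y -> pdist (mdim X) (h k y) x < eps).
  { intros k y ? Ky. specialize (Hk k y ltac:(lia) Ky). specialize (Hk1 k ltac:(lia)).
    pose proof (Rle_abs (b k)). lra. }
  exists (max k0 k1). intros k ?. split.
  - intros z [y [Ky ->]]. now apply Hall.
  - exists (h k y0). split; [now exists y0 | now apply Hall].
Qed.

Section ChartLimit.
Variable X : model.
Let N := mdim X.
Variable g : nat -> Mat.
Variable x : Vec.
Hypothesis Hinv : forall k, invertible N (g k).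
Hypothesis Hx : 0 < dot N x x.

Notation G := (gmv N g x).
Notation u := (gxu N g x).
Notation a_ := (gform N g x).
Notation rho := (gperp_size N g x).

Lemma Rabs_gform_coord_le k i : (i < N)%nat -> Rabs (a_ k i) <= vnorm N (G k (ev i)).
Proof.
  intros Hi. rewrite <- (dot_ev_r N i (a_ k)), dot_gform by auto.
  eapply Rle_trans; [apply Rabs_dot_le|]. rewrite vnorm_gxu; auto. lra.
Qed.

Lemma gform_cv_subseq :
  (forall j, (j < N)%nat -> ev_bounded (fun k => vnorm N (G k (ev j)))) ->
  exists phi a, strict_incr phi /\
    (forall i, (i < N)%nat -> Un_cv (fun k => a_ (phi k) i) (a i)) /\ dot N a x = 1.
Proof.
  intros HB. destruct (ev_bounded_coords_cv_subseq N a_) as [phi [a [Hphi Ha]]].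
  { intros i Hi. apply (ev_bounded_le _ _ (HB i Hi)). exists 0%nat. intros k _.
    now apply Rabs_gform_coord_le. }
  exists phi, a. repeat split; auto.
  apply (UL_sequence (fun k => dot N (a_ (phi k)) x)).
  - apply (dot_cv N (fun k => a_ (phi k)) (fun _ => x)); auto. intros. apply Un_cv_const.
  - assert (E : forall k, dot N (a_ (phi k)) x = 1) by (intros; rewrite dot_gform; apply dot_gxu_self; auto).
    intros eps Heps. exists 0%nat. intros k _. unfold Rdist. rewrite E, Rminus_diag, Rabs_R0. auto.
Qed.

Lemma pdist_gmv_le k y c : 0 < dot N y y -> c * vnorm N y <= Rabs (dot N (a_ k) y) ->
  pdist N (mv N (g k) y) x * (c - rho k) <= vnorm N (a_ k) * pdist N (u k) x + rho k.
Proof.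
  intros Hy Hc. set (al := dot N (a_ k) y) in *.
  assert (Hny : 0 < vnorm N y) by (apply sqrt_lt_R0; auto).
  assert (Hrho : 0 <= rho k) by (apply sumN_nonneg; intros; apply vnorm_nonneg).
  pose proof (pdist_nonneg N (mv N (g k) y) x). pose proof (pdist_nonneg N (u k) x).
  pose proof (vnorm_nonneg N (a_ k)).
  destruct (Rle_lt_dec c (rho k)) as [Hle|Hlt]; [nra|].
  assert (HF : vnorm N (gperp N g x k y) <= vnorm N y * rho k) by apply vnorm_gperp_le.
  assert (Hal : Rabs al <= vnorm N (a_ k) * vnorm N y) by apply Rabs_dot_le.
  assert (HGy : (c - rho k) * vnorm N y <= vnorm N (G k y)).
  { rewrite gmv_decomp. pose proof (vnorm_triang_rev N (vscal al (u k)) (gperp N g x k y)) as Hr.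
    rewrite vnorm_scal, vnorm_gxu in Hr by auto. fold al. nra. }
  assert (HGG : 0 < dot N (G k y) (G k y)).
  { rewrite <- vnorm_sq. assert (0 < vnorm N (G k y)) by nra. nra. }
  set (t := dot N (u k) x / dot N x x).
  assert (Hline : vnorm N (vsub (G k y) (vscal (al * t) x))
                  <= Rabs al * pdist N (u k) x + vnorm N y * rho k).
  { rewrite gmv_decomp. fold al.
    rewrite (vnorm_ext N _ (vadd (vscal al (vsub (u k) (vscal t x))) (gperp N g x k y)))
      by (intros; unfold vadd, vsub, vscal; ring).
    eapply Rle_trans; [apply vnorm_triang|]. rewrite vnorm_scal.
    pose proof (vnorm_proj_le_pdist N (u k) x) as Hp.
    rewrite dot_gxu_self, vnorm_gxu in Hp by auto. specialize (Hp ltac:(lra) Hx). fold t in Hp.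
    pose proof (Rabs_pos al). nra. }
  assert (Hpd : pdist N (G k y) x * ((c - rho k) * vnorm N y)
                <= (vnorm N (a_ k) * pdist N (u k) x + rho k) * vnorm N y).
  { pose proof (pdist_mul_vnorm_le N (G k y) x (al * t) HGG Hx). pose proof (pdist_nonneg N (G k y) x).
    pose proof (Rabs_pos al). nra. }
  unfold gmv in Hpd. rewrite pdist_scal_l in Hpd by (apply Rinv_neq_0_compat, Rgt_not_eq, gx_norm_pos; auto).
  nra.
Qed.

Lemma pdist_gmv_le_of_near k a y c : 0 < c -> 0 < dot N y y ->
  c * vnorm N y <= Rabs (dot N a y) -> vnorm N (vsub (a_ k) a) < c / 2 -> rho k < c / 4 ->
  pdist N (mv N (g k) y) x <= 4 / c * (vnorm N (a_ k) * pdist N (u k) x + rho k).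
Proof.
  intros Hc Hy HcK Hda Hrho.
  assert (Hay : c / 2 * vnorm N y <= Rabs (dot N (a_ k) y)).
  { pose proof (vnorm_nonneg N y).
    pose proof (Rabs_dot_le N (vsub (a_ k) a) y) as Hd. rewrite dot_sub_l in Hd.
    pose proof (Rabs_triang_inv (dot N a y) (dot N a y - dot N (a_ k) y)) as Ht.
    replace (dot N a y - (dot N a y - dot N (a_ k) y)) with (dot N (a_ k) y) in Ht by ring.
    rewrite Rabs_minus_sym in Ht.
    assert (vnorm N (vsub (a_ k) a) * vnorm N y <= c / 2 * vnorm N y)
      by (apply Rmult_le_compat_r; lra).
    lra. }
  pose proof (pdist_gmv_le k y (c / 2) Hy Hay) as Hp.
  pose proof (pdist_nonneg N (mv N (g k) y) x).
  assert (0 <= rho k) by (apply sumN_nonneg; intros; apply vnorm_nonneg).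
  apply Rmult_le_reg_l with (c / 4); [lra|].
  replace (c / 4 * (4 / c * (vnorm N (a_ k) * pdist N (u k) x + rho k)))
    with (vnorm N (a_ k) * pdist N (u k) x + rho k) by (field; lra).
  nra.
Qed.

Lemma chart_limit :
  null_seq (fun k => pdist N (u k) x) ->
  (forall j, (j < N)%nat -> null_seq (fun k => vnorm N (gperp N g x k (ev j)))) ->
  (forall j, (j < N)%nat -> ev_bounded (fun k => vnorm N (G k (ev j)))) ->
  exists phi a, strict_incr phi /\
    (forall i, (i < N)%nat -> Un_cv (fun k => a_ (phi k) i) (a i)) /\ dot N a x = 1 /\
    forall K, compactX X K -> (exists y, K y) -> (forall y, K y -> dot N a y <> 0) ->
      hconv_point X (fun k z => exists y, K y /\ z = mv N (g (phi k)) y) x.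
Proof.
  intros Hu HF HB. destruct (gform_cv_subseq HB) as [phi [a [Hphi [Ha Hax]]]].
  exists phi, a. repeat split; auto.
  intros K HK Hne HKa.
  destruct (compact_chart_lower_bound X K a HK HKa) as [c [Hc HcK]].
  assert (Hda : null_seq (fun k => vnorm N (vsub (a_ (phi k)) a)))
    by exact (coords_cv_vnorm_null N (fun k => a_ (phi k)) a Ha).
  assert (Hrho : null_seq (fun k => rho (phi k))) by (apply null_seq_subseq, null_seq_sumN; auto).
  apply hconv_point_image
    with (b := fun k => 4 / c * (vnorm N (a_ (phi k)) * pdist N (u (phi k)) x + rho (phi k))); auto.
  { apply null_seq_scal, null_seq_plus; auto.
    apply (null_seq_le _ _ (null_seq_abs _ (null_seq_mult _ _ (null_seq_subseq _ _ Hphi Hu)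
                                              (vnorm_cv_ev_bounded N (fun k => a_ (phi k)) a Hda)))).
    exists 0%nat. intros k _. right. f_equal. ring. }
  destruct (Hda (c / 2)) as [k1 Hk1]; [lra|]. destruct (Hrho (c / 4)) as [k2 Hk2]; [lra|].
  exists (max k1 k2). intros k y Hk Ky.
  specialize (Hk1 k ltac:(lia)). specialize (Hk2 k ltac:(lia)).
  rewrite Rabs_pos_eq in Hk1 by apply vnorm_nonneg.
  rewrite Rabs_pos_eq in Hk2 by (apply sumN_nonneg; intros; apply vnorm_nonneg).
  apply pdist_gmv_le_of_near with (a := a); auto.
  apply dot_self_pos, (proj1 HK y Ky).
Qed.

End ChartLimit.

Section DynamicalHypotheses.
Variable X : model.
Let N := mdim X.
Variable g : nat -> Mat.
Variable x : Vec.
Hypothesis Hinv : forall k, invertible N (g k).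
Hypothesis Hxp : is_point X x.
Hypothesis Hcont : forall xs : nat -> Vec, (forall k, is_point X (xs k)) -> pconv X xs x ->
  pconv X (fun k => mv N (g k) (xs k)) x.

Notation G := (gmv N g x).
Notation u := (gxu N g x).
Notation F := (gperp N g x).

Lemma dot_x_pos : 0 < dot N x x.
Proof. apply dot_self_pos, Hxp. Qed.

Lemma pdist_gxu_null : null_seq (fun k => pdist N (u k) x).
Proof.
  pose proof dot_x_pos as Hx.
  apply null_seq_Un_cv. intros e He.
  destruct (Hcont (fun _ => x) (fun _ => Hxp)) with (eps := e) as [k0 Hk0]; auto.
  { intros e' He'. exists 0%nat. intros. unfold Rdist. simpl. rewrite pdist_self, Rminus_0_r, Rabs_R0; auto. }
  exists k0. intros k Hk. unfold gxu, gmv.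
  rewrite pdist_scal_l by (apply Rinv_neq_0_compat, Rgt_not_eq, gx_norm_pos; auto). now apply Hk0.
Qed.

Lemma contracting_near_x eps : 0 < eps -> exists del k0, 0 < del /\
  forall k y, (k0 <= k)%nat -> is_point X y -> pdist N y x < del -> pdist N (mv N (g k) y) x < eps.
Proof.
  apply (seq_cv_uniform (is_point X) (pdist N) (fun k => mv N (g k)) x Hxp).
  - apply pdist_self, dot_x_pos.
  - apply pdist_nonneg.
  - exact Hcont.
Qed.

Lemma gperp_tangent_null (T : nat -> R) v :
  (forall k, 0 < T k) -> cv_infty T ->
  Un_cv (fun k => / T k * ln (dnorm N (g k) x v)) (-1) -> null_seq (fun k => vnorm N (F k v)).
Proof.
  intros HT HTi Hrate. apply (ln_rate_null _ T HT HTi).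
  - intros. apply vnorm_nonneg.
  - intros e He. destruct (Hrate e He) as [k0 Hk0]. exists k0. intros k Hk.
    rewrite <- dnorm_gperp by (auto; apply dot_x_pos). now apply Hk0.
Qed.

Lemma radial_bounded_of_line v : is_tangent X x v -> (forall s, is_point X (vsub x (vscal s v))) ->
  ev_bounded (fun k => dot N (u k) (G k v)).
Proof.
  intros [_ [Hxv _]] Hline. pose proof dot_x_pos as Hx. apply NNPP. intros Hn.
  destruct (contracting_near_x (1/2)) as [del [k0 [Hdel Hnear]]]; [lra|].
  destruct (pdist_gxu_null (1/2)) as [k1 Hk1]; [lra|].
  assert (Hnx : 0 < vnorm N x) by (apply vnorm_pos, Hxp).
  set (C := vnorm N v / (del * vnorm N x)).
  assert (Hk : exists k, (max k0 k1 <= k)%nat /\ C < Rabs (dot N (u k) (G k v))).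
  { apply NNPP. intros Hk. apply Hn. exists C, (max k0 k1). intros k ?.
    apply Rnot_lt_le. intros Hlt. apply Hk. now exists k. }
  destruct Hk as [k [Hk Hmu]]. set (mu := dot N (u k) (G k v)) in *.
  assert (HC : 0 <= C) by (apply Rmult_le_pos; [apply vnorm_nonneg | left; apply Rinv_0_lt_compat; nra]).
  assert (Hmu0 : 0 < Rabs mu) by lra.
  assert (Hmu0' : mu <> 0) by (intros E; rewrite E, Rabs_R0 in Hmu0; lra).
  (* the point y = x - v / mu is close to x, but g_k y is orthogonal to g_k x *)
  set (y := vsub x (vscal (/ mu) v)).
  assert (Hyd : pdist N y x < del).
  { pose proof (pdist_line_le N x v (/ mu) Hx Hxv) as Hl. fold y in Hl. rewrite Rabs_inv in Hl.
    assert (vnorm N v < Rabs mu * (del * vnorm N x)).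
    { unfold C in Hmu. apply Rmult_lt_reg_r with (/ (del * vnorm N x)); [apply Rinv_0_lt_compat; nra|].
      rewrite Rmult_assoc, Rinv_r by nra. lra. }
    apply Rmult_lt_reg_r with (vnorm N x); auto.
    apply Rle_lt_trans with (/ Rabs mu * vnorm N v); auto.
    apply Rmult_lt_reg_l with (Rabs mu); auto.
    rewrite <- Rmult_assoc, Rinv_r by lra. lra. }
  specialize (Hk1 k ltac:(lia)). rewrite Rabs_pos_eq in Hk1 by apply pdist_nonneg.
  pose proof (Hnear k y ltac:(lia) (Hline _) Hyd) as Hclose.
  pose proof (pdist_mv_line_ge N g x Hinv Hx k v Hmu0' (proj1 (Hline _)) Hk1) as Hfar.
  change (1/2 <= pdist N (mv N (g k) y) x) in Hfar. lra.
Qed.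

End DynamicalHypotheses.

Definition xperp (N : nat) (x : Vec) (j : nat) : Vec := vsub (ev j) (vscal (x j / dot N x x) x).

Lemma dot_x_xperp N x j : 0 < dot N x x -> (j < N)%nat -> dot N x (xperp N x j) = 0.
Proof. intros Hx Hj. unfold xperp. rewrite dot_sub_r, dot_scal_r, dot_ev_r by auto. field. lra. Qed.

Lemma ev_xperp N x j : forall i, ev j i = vadd (xperp N x j) (vscal (x j / dot N x x) x) i.
Proof. intros i. unfold xperp, vadd, vsub, vscal. ring. Qed.

Section RealProjective.
Variable n : nat.
Let X := RPn n.
Let N := mdim X.
Variable g : nat -> Mat.
Variable T : nat -> R.
Variable x : Vec.
Hypothesis Hg : forall k, in_group X (g k).
Hypothesis HT : forall k, 0 < T k.
Hypothesis HTi : cv_infty T.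
Hypothesis Hxp : is_point X x.
Hypothesis Hcont : forall xs : nat -> Vec, (forall k, is_point X (xs k)) -> pconv X xs x ->
  pconv X (fun k => mv N (g k) (xs k)) x.
Hypothesis Hrate : forall v, is_tangent X x v ->
  Un_cv (fun k => / T k * ln (dnorm N (g k) x v)) (-1).

Notation G := (gmv N g x).
Notation u := (gxu N g x).
Notation F := (gperp N g x).

Let Hinv k : invertible N (g k) := proj1 (Hg k).
Let Hx : 0 < dot N x x := dot_x_pos X x Hxp.

Lemma RPn_gperp_orth_null v : dot N x v = 0 -> null_seq (fun k => vnorm N (F k v)).
Proof.
  intros Hxv. destruct (classic (Defs.nonzero N v)) as [Hv|Hv].
  - apply (gperp_tangent_null X g x Hinv Hxp T v HT HTi), Hrate. repeat split; auto.
  - intros e He. exists 0%nat. intros k _. rewrite gperp_null, Rabs_R0; auto.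
    now apply nonzero_coords.
Qed.

Lemma RPn_radial_orth_bounded v : dot N x v = 0 -> ev_bounded (fun k => dot N (u k) (G k v)).
Proof.
  intros Hxv. destruct (classic (Defs.nonzero N v)) as [Hv|Hv].
  - apply (radial_bounded_of_line X g x Hinv Hxp Hcont); [repeat split; auto|].
    intros s. split; [|exact I]. apply (dot_neq0_nonzero N _ x).
    rewrite dot_sub_l, dot_scal_l, (dot_sym N v), Hxv. lra.
  - apply (ev_bounded_le _ _ (ev_bounded_const 0)). exists 0%nat. intros k _.
    rewrite (gmv_ext N g x k v (vscal 0 v))
      by (intros; unfold vscal; rewrite (nonzero_coords N v Hv); auto; ring).
    rewrite gmv_scal, dot_scal_r, Rmult_0_l, Rabs_R0. lra.
Qed.

Lemma RPn_gperp_ev_null j : (j < N)%nat -> null_seq (fun k => vnorm N (F k (ev j))).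
Proof.
  intros Hj. apply (null_seq_le _ _ (RPn_gperp_orth_null _ (dot_x_xperp N x j Hx Hj))).
  exists 0%nat. intros k _.
  rewrite (gperp_ext N g x k _ _ (fun i _ => ev_xperp N x j i)), gperp_shift by auto.
  rewrite Rabs_pos_eq by apply vnorm_nonneg. lra.
Qed.

Lemma RPn_gmv_ev_bounded j : (j < N)%nat -> ev_bounded (fun k => vnorm N (G k (ev j))).
Proof.
  intros Hj. set (t := x j / dot N x x).
  apply (ev_bounded_le _ (fun k => Rabs (dot N (u k) (G k (xperp N x j))) + Rabs t + vnorm N (F k (ev j)))).
  - apply ev_bounded_plus; [apply ev_bounded_plus|].
    + apply ev_bounded_abs, RPn_radial_orth_bounded, dot_x_xperp; auto.
    + apply ev_bounded_const.
    + apply null_seq_ev_bounded, RPn_gperp_ev_null; auto.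
  - exists 0%nat. intros k _. rewrite Rabs_pos_eq by apply vnorm_nonneg.
    eapply Rle_trans; [apply vnorm_gmv_le; auto|].
    rewrite (gmv_ext N g x k _ _ (fun i _ => ev_xperp N x j i)) at 1.
    rewrite gmv_add, dot_add_r, dot_gxu_gmv_scal_x by auto. fold t.
    pose proof (Rabs_triang (dot N (u k) (G k (xperp N x j))) t). lra.
Qed.

Lemma RPn_case : exists (phi : nat -> nat) (a : Vec),
  strict_incr phi /\ chart_center X a /\ in_chart X a x /\
  forall K : Vec -> Prop, compactX X K -> (exists y, K y) ->
    (forall y, K y -> in_chart X a y) ->
    hconv_point X (fun k z => exists y, K y /\ z = mv N (g (phi k)) y) x.
Proof.
  destruct (chart_limit X g x Hinv Hx (pdist_gxu_null X g x Hinv Hxp Hcont)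
              RPn_gperp_ev_null RPn_gmv_ev_bounded) as [phi [a [Hphi [_ [Hax Hlim]]]]].
  assert (Hax0 : dot N a x <> 0) by (change (dot (mdim X) a x <> 0); lra).
  exists phi, a. repeat split; auto.
  - exact (dot_neq0_nonzero N a x Hax0).
  - apply Hxp.
  - intros K HK Hne HKa. apply Hlim; auto. intros y Ky. apply (HKa y Ky).
Qed.

End RealProjective.

Definition Jv (p : nat) (v : Vec) : Vec := fun i => if Nat.ltb i (p + 1) then v i else - v i.

Lemma Jv_involutive p v : Jv p (Jv p v) = v.
Proof. extensionality i. unfold Jv. destruct (Nat.ltb i (p + 1)); ring. Qed.

Lemma Jv_add p u v : Jv p (vadd u v) = vadd (Jv p u) (Jv p v).
Proof. extensionality i. unfold Jv, vadd. destruct (Nat.ltb i (p + 1)); ring. Qed.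

Lemma Jv_sub p u v : Jv p (vsub u v) = vsub (Jv p u) (Jv p v).
Proof. extensionality i. unfold Jv, vsub. destruct (Nat.ltb i (p + 1)); ring. Qed.

Lemma Jv_scal p c v : Jv p (vscal c v) = vscal c (Jv p v).
Proof. extensionality i. unfold Jv, vscal. destruct (Nat.ltb i (p + 1)); ring. Qed.

Section JvDot.
Variables N p : nat.

Lemma dot_Jv_l u v : dot N (Jv p u) v = dot N u (Jv p v).
Proof. apply sumN_ext. intros. unfold Jv. destruct (Nat.ltb i (p + 1)); ring. Qed.

Lemma dot_Jv_Jv u v : dot N (Jv p u) (Jv p v) = dot N u v.
Proof. now rewrite dot_Jv_l, Jv_involutive. Qed.

Lemma vnorm_Jv u : vnorm N (Jv p u) = vnorm N u.
Proof. unfold vnorm. now rewrite dot_Jv_Jv. Qed.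

Lemma Jv_ext u v : (forall i, (i < N)%nat -> u i = v i) -> forall i, (i < N)%nat -> Jv p u i = Jv p v i.
Proof. intros H i Hi. unfold Jv. now rewrite H. Qed.

End JvDot.

Lemma qform_Jv p q u v : qform p q u v = dot (p + q + 2) (Jv p u) v.
Proof.
  unfold qform, dot. replace (p + q + 2)%nat with (p + 1 + (q + 1))%nat by lia.
  rewrite (sumN_split (p + 1) (q + 1)),
    (sumN_ext (p + 1) (fun i => Jv p u i * v i) (fun i => u i * v i)),
    (sumN_ext (q + 1) (fun i => Jv p u (p + 1 + i)%nat * v (p + 1 + i)%nat)
                      (fun i => -1 * (u (p + 1 + i)%nat * v (p + 1 + i)%nat))), sumN_scal_l.
  - ring.
  - intros i Hi. unfold Jv. replace (Nat.ltb (p + 1 + i) (p + 1)) with false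
      by (symmetry; apply Nat.ltb_ge; lia). ring.
  - intros i Hi. unfold Jv. replace (Nat.ltb i (p + 1)) with true by (symmetry; apply Nat.ltb_lt; lia).
    reflexivity.
Qed.

Section OrthogonalInverse.
Variables p q : nat.
Let N := (p + q + 2)%nat.
Variable A : Mat.
Hypothesis HA : invertible N A.
Hypothesis Hq : forall u v, qform p q (mv N A u) (mv N A v) = qform p q u v.

(* A^-1 = J A^T J for A preserving the form with Gram matrix J *)
Lemma mv_Jv_mvT_Jv c : forall i, (i < N)%nat -> mv N A (Jv p (mvT N A (Jv p c))) i = c i.
Proof.
  set (d := Jv p (mvT N A (Jv p c))). set (w := vsub (mv N A d) c).
  assert (Hw : forall v, dot N (Jv p w) (mv N A v) = 0).
  { intros v. unfold w. rewrite Jv_sub, dot_sub_l.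
    pose proof (Hq d v) as E. rewrite !qform_Jv in E. fold N in E.
    rewrite E. unfold d. rewrite Jv_involutive, dot_mvT_l. ring. }
  destruct (invertible_mv N A HA) as [B [HAB _]].
  specialize (Hw (mv N B (Jv p w))).
  rewrite (dot_ext N _ (Jv p w) _ (Jv p w)), dot_Jv_Jv in Hw by (auto; intros; apply HAB; auto).
  intros i Hi. pose proof (dot_self_eq0 N w Hw i Hi) as Z. unfold w, vsub in Z. lra.
Qed.

End OrthogonalInverse.

Lemma exists_perp_two_coords N x i1 i2 : i1 <> i2 -> (i1 < N)%nat -> (i2 < N)%nat ->
  exists f, (forall i, i <> i1 -> i <> i2 -> f i = 0) /\ Defs.nonzero N f /\ dot N x f = 0.
Proof.
  intros Hne H1 H2. assert (E12 : Nat.eqb i1 i2 = false) by (apply Nat.eqb_neq; auto).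
  assert (E21 : Nat.eqb i2 i1 = false) by (apply Nat.eqb_neq; auto).
  destruct (classic (x i1 = 0 /\ x i2 = 0)) as [[Z1 Z2]|Hz].
  - exists (ev i1). repeat split.
    + intros i Hi _. unfold ev. apply Nat.eqb_neq in Hi. now rewrite Hi.
    + exists i1. split; auto. unfold ev. rewrite Nat.eqb_refl. lra.
    + rewrite dot_ev_r; auto.
  - exists (vsub (vscal (x i2) (ev i1)) (vscal (x i1) (ev i2))). repeat split.
    + intros i Ha Hb. unfold vsub, vscal, ev.
      apply Nat.eqb_neq in Ha. apply Nat.eqb_neq in Hb. rewrite Ha, Hb. ring.
    + destruct (Req_dec (x i2) 0) as [E|E].
      * exists i2. split; auto. unfold vsub, vscal, ev. rewrite Nat.eqb_refl, E21.
        assert (x i1 <> 0) by tauto. lra.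
      * exists i1. split; auto. unfold vsub, vscal, ev. rewrite Nat.eqb_refl, E12. lra.
    + rewrite dot_sub_r, !dot_scal_r, !dot_ev_r by auto. ring.
Qed.

Section Einstein.
Variables p q : nat.
Let X := Ein p q.
Let N := mdim X.
Variable g : nat -> Mat.
Variable T : nat -> R.
Variable x : Vec.
Hypothesis Hp : (1 <= p)%nat.
Hypothesis Hq : (1 <= q)%nat.
Hypothesis Hg : forall k, in_group X (g k).
Hypothesis HT : forall k, 0 < T k.
Hypothesis HTi : cv_infty T.
Hypothesis Hxp : is_point X x.
Hypothesis Hcont : forall xs : nat -> Vec, (forall k, is_point X (xs k)) -> pconv X xs x ->
  pconv X (fun k => mv N (g k) (xs k)) x.
Hypothesis Hrate : forall v, is_tangent X x v ->
  Un_cv (fun k => / T k * ln (dnorm N (g k) x v)) (-1).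

Notation J := (Jv p).
Notation G := (gmv N g x).
Notation u := (gxu N g x).
Notation F := (gperp N g x).
Notation a_ := (gform N g x).
Notation nrm := (gx_norm N g x).

Let Hinv k : invertible N (g k) := proj1 (Hg k).
Let Hx : 0 < dot N x x := dot_x_pos X x Hxp.

Lemma dot_J_mv k y z : dot N (J (mv N (g k) y)) (mv N (g k) z) = dot N (J y) z.
Proof. change N with (p + q + 2)%nat. rewrite <- !qform_Jv. exact (proj2 (Hg k) y z). Qed.

Lemma dot_J_x_x : dot N (J x) x = 0.
Proof. change N with (p + q + 2)%nat. rewrite <- qform_Jv. exact (proj2 Hxp). Qed.

Definition ein_tangent v := dot N x v = 0 /\ dot N (J x) v = 0.

Lemma ein_tangent_is_tangent v : ein_tangent v -> Defs.nonzero N v -> is_tangent X x v.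
Proof. intros [H1 H2] Hn. repeat split; auto. simpl. now rewrite qform_Jv. Qed.

Lemma ein_tangent_line_point v : ein_tangent v -> dot N (J v) v = 0 ->
  forall s, is_point X (vsub x (vscal s v)).
Proof.
  intros [H1 H2] Hv s. split.
  - apply (dot_neq0_nonzero N _ x). rewrite dot_sub_l, dot_scal_l, (dot_sym N v), H1. lra.
  - simpl. rewrite qform_Jv. change (dot N (J (vsub x (vscal s v))) (vsub x (vscal s v)) = 0).
    rewrite Jv_sub, Jv_scal, dot_sub_l, !dot_sub_r, !dot_scal_l, !dot_scal_r,
      (dot_Jv_l N p v x), (dot_sym N v (J x)), H2, dot_J_x_x, Hv.
    ring.
Qed.

Lemma ein_tangent_J v : ein_tangent v -> ein_tangent (J v).
Proof.
  intros [H1 H2]. split.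
  - now rewrite dot_sym, dot_Jv_l, dot_sym.
  - now rewrite dot_Jv_Jv.
Qed.

Lemma ein_tangent_add v w : ein_tangent v -> ein_tangent w -> ein_tangent (vadd v w).
Proof. intros [A1 A2] [B1 B2]. split; rewrite dot_add_r; lra. Qed.

Lemma ein_tangent_scal c v : ein_tangent v -> ein_tangent (vscal c v).
Proof. intros [A1 A2]. split; rewrite dot_scal_r; nra. Qed.

Lemma ein_tangent_J_fixed : exists f, ein_tangent f /\ Defs.nonzero N f /\ J f = f.
Proof.
  destruct (exists_perp_two_coords N x 0 1) as [f [Hs [Hn Hd]]]; try (unfold N; simpl; lia).
  assert (HJ : J f = f).
  { extensionality i. unfold Jv. destruct (Nat.ltb_spec i (p + 1)); auto. rewrite Hs by lia. ring. }
  exists f. repeat split; auto. now rewrite dot_Jv_l, HJ.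
Qed.

Lemma ein_tangent_J_antifixed : exists f, ein_tangent f /\ Defs.nonzero N f /\ J f = vscal (-1) f.
Proof.
  destruct (exists_perp_two_coords N x (p + 1) (p + 2)) as [f [Hs [Hn Hd]]]; try (unfold N; simpl; lia).
  assert (HJ : J f = vscal (-1) f).
  { extensionality i. unfold Jv, vscal. destruct (Nat.ltb_spec i (p + 1)); [rewrite Hs by lia|]; ring. }
  exists f. repeat split; auto. rewrite dot_Jv_l, HJ, dot_scal_r, Hd. ring.
Qed.

Definition isotropic_tangent i := ein_tangent i /\ dot N (J i) i = 0.

(* split v into its J-eigencomponents and add to each a multiple of an eigenvector of the
   opposite sign, of the same Euclidean length *)
Lemma isotropic_tangent_decomp v : ein_tangent v -> exists i1 i2 i3 i4,
  isotropic_tangent i1 /\ isotropic_tangent i2 /\ isotropic_tangent i3 /\ isotropic_tangent i4 /\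
  forall i, v i = vadd (vadd (vscal (1/2) i1) (vscal (1/2) i2)) (vadd (vscal (1/2) i3) (vscal (1/2) i4)) i.
Proof.
  intros Hv.
  destruct ein_tangent_J_fixed as [fp [Tp [Np Jp]]].
  destruct ein_tangent_J_antifixed as [fm [Tm [Nm Jm]]].
  assert (Hnp := vnorm_pos N fp Np). assert (Hnm := vnorm_pos N fm Nm).
  set (vp := vscal (1/2) (vadd v (J v))). set (vm := vscal (1/2) (vsub v (J v))).
  assert (Jvp : J vp = vp).
  { unfold vp. rewrite Jv_scal, Jv_add, Jv_involutive. extensionality i. unfold vscal, vadd. ring. }
  assert (Jvm : J vm = vscal (-1) vm).
  { unfold vm. rewrite Jv_scal, Jv_sub, Jv_involutive. extensionality i. unfold vscal, vsub. ring. }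
  assert (Tvp : ein_tangent vp) by (apply ein_tangent_scal, ein_tangent_add, ein_tangent_J; auto).
  assert (Tvm : ein_tangent vm).
  { assert (E : vm = vadd (vscal (1/2) v) (vscal (-1/2) (J v))).
    { extensionality i. unfold vm, vadd, vsub, vscal. field. }
    rewrite E. apply ein_tangent_add; apply ein_tangent_scal; auto. now apply ein_tangent_J. }
  set (lp := vnorm N vp / vnorm N fm). set (lm := vnorm N vm / vnorm N fp).
  assert (Hlp : lp * lp * dot N fm fm = dot N vp vp)
    by (unfold lp; rewrite <- !vnorm_sq; field; lra).
  assert (Hlm : lm * lm * dot N fp fp = dot N vm vm)
    by (unfold lm; rewrite <- !vnorm_sq; field; lra).
  assert (Iso_p : forall l, l * l * dot N fm fm = dot N vp vp ->
                  isotropic_tangent (vadd vp (vscal l fm))).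
  { intros l Hl. split; [apply ein_tangent_add, ein_tangent_scal; auto|].
    rewrite Jv_add, Jv_scal, Jvp, Jm, dot_add_l, !dot_add_r, !dot_scal_l, !dot_scal_r, (dot_sym N fm vp).
    lra. }
  assert (Iso_m : forall l, l * l * dot N fp fp = dot N vm vm ->
                  isotropic_tangent (vadd vm (vscal l fp))).
  { intros l Hl. split; [apply ein_tangent_add, ein_tangent_scal; auto|].
    rewrite Jv_add, Jv_scal, Jvm, Jp, dot_add_l, !dot_add_r, !dot_scal_l, !dot_scal_r, (dot_sym N fp vm).
    lra. }
  exists (vadd vp (vscal lp fm)), (vadd vp (vscal (- lp) fm)),
         (vadd vm (vscal lm fp)), (vadd vm (vscal (- lm) fp)).
  repeat split; try apply Iso_p; try apply Iso_m; try nra.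
  intros i. unfold vp, vm, vadd, vsub, vscal. field.
Qed.

Lemma tangent_bounded_of_isotropic (phi : nat -> Vec -> R) :
  (forall k a b, phi k (vadd a b) = phi k a + phi k b) ->
  (forall k c a, phi k (vscal c a) = c * phi k a) ->
  (forall k a b, (forall i, (i < N)%nat -> a i = b i) -> phi k a = phi k b) ->
  (forall i, isotropic_tangent i -> Defs.nonzero N i -> ev_bounded (fun k => phi k i)) ->
  forall v, ein_tangent v -> ev_bounded (fun k => phi k v).
Proof.
  intros Hadd Hsc Hext Hiso.
  assert (Hiso0 : forall i, isotropic_tangent i -> ev_bounded (fun k => phi k i)).
  { intros i Hi. destruct (classic (Defs.nonzero N i)) as [|Hn]; auto.
    apply (ev_bounded_le _ _ (ev_bounded_const 0)). exists 0%nat. intros k _.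
    rewrite (Hext k i (vscal 0 i)), Hsc, Rmult_0_l, Rabs_R0; [lra|].
    intros; unfold vscal; rewrite (nonzero_coords N i Hn); auto; ring. }
  intros v Hv. destruct (isotropic_tangent_decomp v Hv) as [i1 [i2 [i3 [i4 [H1 [H2 [H3 [H4 Hdec]]]]]]]].
  apply (ev_bounded_le _
           (fun k => Rabs (1/2 * phi k i1 + 1/2 * phi k i2 + (1/2 * phi k i3 + 1/2 * phi k i4)))).
  - apply ev_bounded_abs. repeat apply ev_bounded_plus; apply ev_bounded_scal; auto.
  - exists 0%nat. intros k _. rewrite (Hext k v _ (fun i _ => Hdec i)), !Hadd, !Hsc. lra.
Qed.

Lemma radial_ein_tangent_bounded v : ein_tangent v -> ev_bounded (fun k => dot N (u k) (G k v)).
Proof.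
  apply (tangent_bounded_of_isotropic (fun k v => dot N (u k) (G k v))).
  - intros. now rewrite gmv_add, dot_add_r.
  - intros. now rewrite gmv_scal, dot_scal_r.
  - intros. now rewrite (gmv_ext N g x k a b).
  - intros i [Ti Ii] Ni. apply (radial_bounded_of_line X g x Hinv Hxp Hcont).
    + now apply ein_tangent_is_tangent.
    + now apply ein_tangent_line_point.
Qed.

Lemma gperp_ein_tangent_null v : ein_tangent v -> null_seq (fun k => vnorm N (F k v)).
Proof.
  intros Tv. destruct (classic (Defs.nonzero N v)) as [Hn|Hn].
  - apply (gperp_tangent_null X g x Hinv Hxp T v HT HTi), Hrate, ein_tangent_is_tangent; auto.
  - intros e He. exists 0%nat. intros k _. rewrite gperp_null, Rabs_R0; auto. now apply nonzero_coords.
Qed.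

Lemma gmv_ein_tangent_bounded v : ein_tangent v -> ev_bounded (fun k => vnorm N (G k v)).
Proof.
  intros Tv.
  apply (ev_bounded_le _ (fun k => Rabs (dot N (u k) (G k v)) + vnorm N (F k v))).
  - apply ev_bounded_plus.
    + now apply ev_bounded_abs, radial_ein_tangent_bounded.
    + now apply null_seq_ev_bounded, gperp_ein_tangent_null.
  - exists 0%nat. intros k _. rewrite Rabs_pos_eq by apply vnorm_nonneg. now apply vnorm_gmv_le.
Qed.

Lemma dot_J_gmv_self k y : dot N (J (G k y)) (G k y) = / (nrm k * nrm k) * dot N (J y) y.
Proof.
  unfold gmv. rewrite Jv_scal, dot_scal_l, dot_scal_r, dot_J_mv, Rinv_mult. ring.
Qed.

Lemma dot_J_gxu_self k : dot N (J (u k)) (u k) = 0.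
Proof. unfold gxu. rewrite dot_J_gmv_self, dot_J_x_x. ring. Qed.

Lemma dot_J_gmv_decomp k y :
  dot N (J (G k y)) (G k y)
  = 2 * dot N (u k) (G k y) * dot N (J (u k)) (F k y) + dot N (J (F k y)) (F k y).
Proof.
  set (mu := dot N (u k) (G k y)).
  assert (E : G k y = vadd (vscal mu (u k)) (F k y))
    by (unfold gperp; fold mu; extensionality i; unfold vadd, vsub, vscal; ring).
  rewrite E at 1 2. rewrite Jv_add, Jv_scal, dot_add_l, !dot_add_r, !dot_scal_l, !dot_scal_r,
    dot_J_gxu_self, (dot_Jv_l N p (F k y) (u k)), (dot_sym N (F k y)).
  ring.
Qed.

(* B(G_k f, G_k f) = |f|^2 / |g_k x|^2 for a J-fixed f, while in the frame (u_k, F_k) the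
   left side tends to 0 *)
Lemma gx_norm_inv_sq_null : null_seq (fun k => / (nrm k * nrm k)).
Proof.
  destruct ein_tangent_J_fixed as [f [Tf [Nf Jf]]].
  assert (Hf := dot_self_pos N f Nf).
  assert (Hmu := radial_ein_tangent_bounded f Tf). assert (Hr := gperp_ein_tangent_null f Tf).
  apply (null_seq_le _ (fun k => / dot N f f *
    (vnorm N (F k f) * (2 * Rabs (dot N (u k) (G k f)) + vnorm N (F k f))))).
  { apply null_seq_scal, null_seq_mult; auto.
    apply ev_bounded_plus; [apply ev_bounded_scal, ev_bounded_abs|apply null_seq_ev_bounded]; auto. }
  exists 0%nat. intros k _. pose proof (gx_norm_pos N g x Hinv Hx k).
  set (mu := dot N (u k) (G k f)). set (r := F k f).
  assert (Id : / (nrm k * nrm k) = / dot N f f * (2 * mu * dot N (J (u k)) r + dot N (J r) r)).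
  { unfold mu, r. rewrite <- dot_J_gmv_decomp, dot_J_gmv_self, Jf. field. lra. }
  assert (A1 : Rabs (dot N (J (u k)) r) <= vnorm N r).
  { eapply Rle_trans; [apply Rabs_dot_le|]. rewrite vnorm_Jv, vnorm_gxu; auto. lra. }
  assert (A2 : Rabs (dot N (J r) r) <= vnorm N r * vnorm N r)
    by (eapply Rle_trans; [apply Rabs_dot_le | rewrite vnorm_Jv; lra]).
  pose proof (Rabs_pos mu). pose proof (vnorm_nonneg N r). pose proof (Rabs_pos (dot N (J (u k)) r)).
  assert (Hfi : 0 < / dot N f f) by (apply Rinv_0_lt_compat; auto).
  rewrite Id, Rabs_mult, (Rabs_pos_eq (/ dot N f f)) by lra.
  apply Rmult_le_compat_l; [lra|].
  eapply Rle_trans; [apply Rabs_triang|]. rewrite !Rabs_mult, (Rabs_pos_eq 2) by lra. nra.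
Qed.

Lemma gmv_J_x_orth_bounded e : dot N (J x) e = 0 -> ev_bounded (fun k => vnorm N (G k e)).
Proof.
  intros He. set (al := dot N e x / dot N x x). set (v := vsub e (vscal al x)).
  assert (Tv : ein_tangent v).
  { split; unfold v; rewrite dot_sub_r, dot_scal_r.
    - unfold al. rewrite dot_sym. field. lra.
    - rewrite He, dot_J_x_x. ring. }
  apply (ev_bounded_le _ (fun k => vnorm N (G k v) + Rabs al)).
  - apply ev_bounded_plus; [now apply gmv_ein_tangent_bounded | apply ev_bounded_const].
  - exists 0%nat. intros k _. rewrite Rabs_pos_eq by apply vnorm_nonneg.
    rewrite (gmv_ext N g x k e (vadd v (vscal al x))) by (intros; unfold v, vadd, vsub, vscal; ring).
    rewrite gmv_add, gmv_scal. eapply Rle_trans; [apply vnorm_triang|].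
    rewrite vnorm_scal. change (G k x) with (u k). rewrite vnorm_gxu by auto. lra.
Qed.

(* g_k^-1 c / |g_k x| *)
Definition preimage k c := J (vscal (/ nrm k) (mvT N (g k) (J c))).

Lemma dot_preimage k c e : dot N (preimage k c) e = dot N (J c) (G k (J e)).
Proof.
  unfold preimage, gmv. rewrite dot_Jv_l, dot_scal_l, dot_mvT_l, dot_scal_r. reflexivity.
Qed.

Lemma mv_preimage k c : forall i, (i < N)%nat -> mv N (g k) (preimage k c) i = / nrm k * c i.
Proof.
  intros i Hi. unfold preimage. rewrite Jv_scal, mv_scal. unfold vscal. f_equal.
  exact (mv_Jv_mvT_Jv p q (g k) (Hinv k) (proj2 (Hg k)) c i Hi).
Qed.

Lemma preimage_point k c : is_point X c -> is_point X (preimage k c).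
Proof.
  intros [Hc Hcc]. pose proof (gx_norm_pos N g x Hinv Hx k) as Hn. split.
  - apply NNPP. intros Hz. destruct Hc as [i [Hi Hci]]. apply Hci.
    pose proof (mv_preimage k c i Hi) as E. rewrite mv_zero in E by now apply nonzero_coords.
    assert (0 < / nrm k) by (apply Rinv_0_lt_compat; lra). nra.
  - simpl. rewrite qform_Jv. change (dot N (J (preimage k c)) (preimage k c) = 0).
    rewrite <- dot_J_mv with (k := k).
    rewrite (dot_ext N _ (J (vscal (/ nrm k) c)) _ (vscal (/ nrm k) c)).
    + rewrite Jv_scal, dot_scal_l, dot_scal_r. simpl in Hcc. rewrite qform_Jv in Hcc.
      change (dot N (J c) c = 0) in Hcc. rewrite Hcc. ring.
    + apply Jv_ext. intros. now rewrite mv_preimage.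
    + intros. now rewrite mv_preimage.
Qed.

(* g_k^-1 c stays away from x (hypothesis (1)), so its distance to the line through x, which is
   controlled by the bounded vectors G_k (J xperp_j), controls its whole length *)
Lemma pairing_G_Jx_bounded c : is_point X c -> 0 < pdist N c x ->
  ev_bounded (fun k => dot N (J c) (G k (J x))).
Proof.
  intros Hc Hpc.
  destruct (contracting_near_x X g x Hxp Hcont (pdist N c x) Hpc) as [del [k0 [Hdel Hnear]]].
  set (S := fun k => sumN N (fun j => vnorm N (G k (J (xperp N x j))))).
  assert (HS : ev_bounded S).
  { apply ev_bounded_sumN. intros j Hj. apply gmv_J_x_orth_bounded.
    rewrite dot_Jv_Jv. now apply dot_x_xperp. }
  apply (ev_bounded_le _ (fun k => vnorm N c * S k * / del * vnorm N x)).
  { repeat apply ev_bounded_mult; auto; apply ev_bounded_const. }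
  exists k0. intros k Hk. set (y := preimage k c).
  assert (Hyp : is_point X y) by now apply preimage_point.
  assert (Hy : 0 < dot N y y) by apply dot_self_pos, Hyp.
  pose proof (gx_norm_pos N g x Hinv Hx k).
  assert (Hyd : del <= pdist N y x).
  { apply Rnot_lt_le. intros Hlt. specialize (Hnear k y Hk Hyp Hlt).
    rewrite (pdist_ext N _ (vscal (/ nrm k) c) x x) in Hnear by (auto; apply mv_preimage).
    rewrite pdist_scal_l in Hnear by (apply Rinv_neq_0_compat; lra). lra. }
  set (t := dot N y x / dot N x x).
  assert (Hline : vnorm N (vsub y (vscal t x)) <= vnorm N c * S k).
  { eapply Rle_trans; [apply vnorm_le_sum_abs|]. unfold S. rewrite <- sumN_scal_l. apply sumN_le.
    intros j Hj.
    replace (vsub y (vscal t x) j) with (dot N y (xperp N x j))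
      by (unfold xperp, t; rewrite dot_sub_r, dot_scal_r, dot_ev_r by auto; unfold vsub, vscal; field; lra).
    unfold y. rewrite dot_preimage. eapply Rle_trans; [apply Rabs_dot_le|]. rewrite vnorm_Jv. lra. }
  pose proof (pdist_mul_vnorm_le N y x t Hy Hx).
  pose proof (vnorm_nonneg N x). pose proof (vnorm_nonneg N y).
  assert (Hny : vnorm N y <= vnorm N c * S k * / del).
  { apply Rmult_le_reg_l with del; auto. replace (del * (vnorm N c * S k * / del)) with (vnorm N c * S k)
      by (field; lra). nra. }
  rewrite <- dot_preimage. fold y. eapply Rle_trans; [apply Rabs_dot_le|].
  apply Rmult_le_compat_r; auto.
Qed.

Notation w := (fun k => G k (J x)).

Lemma pairing_tangent_bounded v : ein_tangent v -> ev_bounded (fun k => dot N (J v) (w k)).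
Proof.
  apply (tangent_bounded_of_isotropic (fun k v => dot N (J v) (w k))).
  - intros. now rewrite Jv_add, dot_add_l.
  - intros. now rewrite Jv_scal, dot_scal_l.
  - intros. apply dot_ext; auto. now apply Jv_ext.
  - intros i [Ti Ii] Ni. apply pairing_G_Jx_bounded.
    + split; auto. simpl. now rewrite qform_Jv.
    + apply pdist_orth_pos; auto using dot_self_pos. rewrite dot_sym. apply Ti.
Qed.

Lemma pairing_J_x_bounded : ev_bounded (fun k => dot N (J (J x)) (w k)).
Proof.
  apply pairing_G_Jx_bounded.
  - split.
    + apply (dot_neq0_nonzero N _ (J x)). rewrite dot_Jv_Jv. lra.
    + simpl. rewrite qform_Jv, Jv_involutive, dot_sym. apply dot_J_x_x.
  - apply pdist_orth_pos; auto. rewrite dot_Jv_Jv. auto. apply dot_J_x_x.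
Qed.

Lemma exists_isotropic_tangent_nonzero : exists i, isotropic_tangent i /\ Defs.nonzero N i.
Proof.
  destruct ein_tangent_J_fixed as [fp [Tfp [Nfp Jfp]]].
  destruct ein_tangent_J_antifixed as [fm [Tfm [Nfm Jfm]]].
  assert (Hnp := vnorm_pos N fp Nfp). assert (Hnm := vnorm_pos N fm Nfm).
  set (lam := vnorm N fm / vnorm N fp).
  assert (Hlam : 0 < lam) by (apply Rdiv_lt_0_compat; auto).
  exists (vadd fm (vscal lam fp)). split; [split|].
  - apply ein_tangent_add, ein_tangent_scal; auto.
  - rewrite Jv_add, Jv_scal, Jfp, Jfm, dot_add_l, !dot_add_r, !dot_scal_l, !dot_scal_r, (dot_sym N fp fm).
    unfold lam. rewrite <- !vnorm_sq. field. lra.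
  - (* the J-fixed part of fm + lam fp is lam fp, which is nonzero *)
    destruct Nfp as [j [Hj Hfj]]. exists j. split; auto. intros Z.
    assert (HJ : J (vadd fm (vscal lam fp)) j = lam * fp j - fm j)
      by (rewrite Jv_add, Jv_scal, Jfp, Jfm; unfold vadd, vscal; ring).
    unfold Jv in HJ. unfold vadd, vscal in Z, HJ.
    destruct (Nat.ltb j (p + 1)); nra.
Qed.

Lemma pairing_x_bounded : ev_bounded (fun k => dot N (J x) (w k)).
Proof.
  destruct exists_isotropic_tangent_nonzero as [i0 [[Ti0 Ii0] Ni0]].
  assert (Pi0 := dot_self_pos N i0 Ni0).
  set (c := vadd x i0).
  assert (Hcx : dot N c x = dot N x x) by (unfold c; rewrite dot_add_l, (dot_sym N i0), (proj1 Ti0); ring).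
  assert (Hcc : dot N c c = dot N x x + dot N i0 i0)
    by (unfold c; rewrite dot_add_l, !dot_add_r, (dot_sym N i0 x), (proj1 Ti0); ring).
  assert (HcP : is_point X c).
  { split; [apply (dot_neq0_nonzero N _ x); lra|].
    simpl. rewrite qform_Jv. change (dot N (J c) c = 0). unfold c.
    rewrite Jv_add, dot_add_l, !dot_add_r, dot_J_x_x, Ii0, (proj2 Ti0), (dot_Jv_l N p i0 x),
      (dot_sym N i0), (proj2 Ti0). ring. }
  assert (Hpc : 0 < pdist N c x).
  { pose proof (pdist_sq N c x ltac:(lra) Hx) as E. rewrite Hcx, Hcc in E.
    replace (1 - dot N x x ^ 2 / ((dot N x x + dot N i0 i0) * dot N x x))
      with (dot N i0 i0 / (dot N x x + dot N i0 i0)) in E by (field; lra).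
    assert (0 < dot N i0 i0 / (dot N x x + dot N i0 i0)) by (apply Rdiv_lt_0_compat; lra).
    pose proof (pdist_nonneg N c x). nra. }
  apply (ev_bounded_le _ (fun k => Rabs (dot N (J c) (w k) + (-1) * dot N (J i0) (w k)))).
  - apply ev_bounded_abs, ev_bounded_plus; [|apply ev_bounded_scal, pairing_tangent_bounded]; auto.
    now apply pairing_G_Jx_bounded.
  - exists 0%nat. intros k _. unfold c. rewrite Jv_add, dot_add_l. right. f_equal. ring.
Qed.

Definition x_coef e := dot N e x / dot N x x.
Definition Jx_coef e := dot N e (J x) / dot N x x.
Definition tangent_part e := vsub (vsub e (vscal (x_coef e) x)) (vscal (Jx_coef e) (J x)).

Lemma tangent_part_tangent e : ein_tangent (tangent_part e).
Proof.
  split; unfold tangent_part, x_coef, Jx_coef; rewrite !dot_sub_r, !dot_scal_r.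
  - rewrite (dot_sym N x (J x)), dot_J_x_x, (dot_sym N x e). field. lra.
  - rewrite dot_J_x_x, dot_Jv_Jv, (dot_sym N (J x) e). field. lra.
Qed.

Lemma tangent_part_decomp e :
  forall i, e i = vadd (vadd (vscal (Jx_coef e) (J x)) (tangent_part e)) (vscal (x_coef e) x) i.
Proof. intros i. unfold tangent_part, vadd, vsub, vscal. ring. Qed.

Lemma pairing_bounded e : ev_bounded (fun k => dot N (J e) (w k)).
Proof.
  apply (ev_bounded_le _ (fun k => Rabs (Jx_coef e * dot N (J (J x)) (w k)
                                     + dot N (J (tangent_part e)) (w k) + x_coef e * dot N (J x) (w k)))).
  - apply ev_bounded_abs. repeat apply ev_bounded_plus; try apply ev_bounded_scal.
    + apply pairing_J_x_bounded.
    + apply pairing_tangent_bounded, tangent_part_tangent.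
    + apply pairing_x_bounded.
  - exists 0%nat. intros k _. right. f_equal.
    rewrite (dot_ext N (J e) (J (vadd (vadd (vscal (Jx_coef e) (J x)) (tangent_part e)) (vscal (x_coef e) x)))
               (w k) (w k)) by (auto; apply Jv_ext; intros; apply tangent_part_decomp).
    rewrite !Jv_add, !Jv_scal, !dot_add_l, !dot_scal_l. ring.
Qed.

Lemma gmv_J_x_bounded : ev_bounded (fun k => vnorm N (w k)).
Proof.
  apply (ev_bounded_le _ (fun k => sumN N (fun i => Rabs (dot N (J (J (ev i))) (w k))))).
  - apply ev_bounded_sumN. intros i Hi. apply ev_bounded_abs, pairing_bounded.
  - exists 0%nat. intros k _. rewrite Rabs_pos_eq by apply vnorm_nonneg.
    eapply Rle_trans; [apply vnorm_le_sum_abs|]. apply sumN_le. intros i Hi.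
    rewrite Jv_involutive, dot_ev_l by auto. lra.
Qed.

Lemma gmv_bounded e : ev_bounded (fun k => vnorm N (G k e)).
Proof.
  apply (ev_bounded_le _ (fun k => Rabs (Jx_coef e) * vnorm N (w k) + vnorm N (G k (tangent_part e))
                                   + Rabs (x_coef e))).
  - repeat apply ev_bounded_plus.
    + apply ev_bounded_scal, gmv_J_x_bounded.
    + apply gmv_ein_tangent_bounded, tangent_part_tangent.
    + apply ev_bounded_const.
  - exists 0%nat. intros k _. rewrite Rabs_pos_eq by apply vnorm_nonneg.
    rewrite (gmv_ext N g x k e _ (fun i _ => tangent_part_decomp e i)), !gmv_add, !gmv_scal.
    eapply Rle_trans; [apply vnorm_triang|]. eapply Rle_trans; [apply Rplus_le_compat_r, vnorm_triang|].
    rewrite !vnorm_scal. change (G k x) with (u k). rewrite vnorm_gxu by auto. lra.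
Qed.

Lemma gmv_preimage k c : forall i, (i < N)%nat -> G k (preimage k c) i = / (nrm k * nrm k) * c i.
Proof. intros i Hi. unfold gmv, vscal. rewrite mv_preimage, Rinv_mult by auto. ring. Qed.

Lemma Jv_gform k : J (a_ k) = preimage k (J (u k)).
Proof. unfold gform, preimage. now rewrite Jv_involutive. Qed.

Lemma gform_J_isotropic k : dot N (a_ k) (J (a_ k)) = 0.
Proof.
  rewrite dot_gform, Jv_gform, (dot_ext N (u k) (u k) _ (vscal (/ (nrm k * nrm k)) (J (u k))));
    auto using gmv_preimage.
  rewrite dot_scal_r, dot_sym, dot_J_gxu_self. ring.
Qed.

Lemma vnorm_gform_le k : vnorm N (a_ k) <= sumN N (fun i => vnorm N (G k (ev i))).
Proof.
  eapply Rle_trans; [apply vnorm_le_sum_abs|]. apply sumN_le. intros i Hi.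
  now apply (Rabs_gform_coord_le X g x Hinv Hx).
Qed.

Lemma gperp_decomp k e : F k e = vadd (vscal (Jx_coef e) (F k (J x))) (F k (tangent_part e)).
Proof.
  rewrite (gperp_ext N g x k e _ (fun i _ => tangent_part_decomp e i)), gperp_shift by auto.
  now rewrite gperp_add, gperp_scal.
Qed.

Definition tangent_perp_size k := sumN N (fun i => vnorm N (F k (tangent_part (J (ev i))))).

(* h = g_k^-1 J F_k(Jx) / |g_k x| is a0 x plus an error of size |F_k(Jx)| tangent_perp_size;
   pairing g_k h with u_k two ways bounds a0 = |F_k(Jx)|^2 / |x|^2 *)
Lemma vnorm_gperp_J_x_le k :
  vnorm N (F k (J x)) <= dot N x x * (/ (nrm k * nrm k) + vnorm N (a_ k) * tangent_perp_size k).
Proof.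
  pose proof (gx_norm_pos N g x Hinv Hx k) as Hn.
  set (s := F k (J x)). set (h := preimage k (J s)). set (a0 := dot N s s / dot N x x).
  set (tps := tangent_perp_size k).
  assert (Hsu : dot N s (u k) = 0) by apply (dot_gperp_gxu N g x Hinv Hx).
  assert (Hh : forall i, (i < N)%nat -> h i = a0 * x i + dot N s (F k (tangent_part (J (ev i))))).
  { intros i Hi. rewrite <- (dot_ev_r N i h Hi). unfold h. rewrite dot_preimage, Jv_involutive.
    rewrite gmv_decomp, dot_add_r, dot_scal_r, Hsu, gperp_decomp,
      dot_add_r, dot_scal_r.
    unfold Jx_coef. rewrite dot_Jv_Jv, dot_ev_l by auto. fold s. unfold a0. field. lra. }
  set (r := vsub h (vscal a0 x)).
  assert (Hr : vnorm N r <= vnorm N s * tps).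
  { eapply Rle_trans; [apply vnorm_le_sum_abs|]. unfold tps, tangent_perp_size.
    rewrite <- sumN_scal_l. apply sumN_le. intros i Hi.
    unfold r, vsub, vscal. rewrite Hh by auto.
    replace (a0 * x i + dot N s (F k (tangent_part (J (ev i)))) - a0 * x i)
      with (dot N s (F k (tangent_part (J (ev i))))) by ring.
    apply Rabs_dot_le. }
  assert (E1 : dot N (u k) (G k h) = a0 + dot N (a_ k) r).
  { rewrite (gmv_ext N g x k h (vadd (vscal a0 x) r)) by (intros; unfold r, vadd, vsub, vscal; ring).
    rewrite gmv_add, dot_add_r, dot_gxu_gmv_scal_x, dot_gform by auto. reflexivity. }
  assert (E2 : dot N (u k) (G k h) = / (nrm k * nrm k) * dot N (u k) (J s))
    by (rewrite <- dot_scal_r; apply dot_ext; auto; apply gmv_preimage).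
  assert (Hus : Rabs (dot N (u k) (J s)) <= vnorm N s)
    by (eapply Rle_trans; [apply Rabs_dot_le | rewrite vnorm_Jv, vnorm_gxu by auto; lra]).
  assert (Har : Rabs (dot N (a_ k) r) <= vnorm N (a_ k) * (vnorm N s * tps)).
  { eapply Rle_trans; [apply Rabs_dot_le|]. apply Rmult_le_compat_l; auto using vnorm_nonneg. }
  assert (Ha0 : a0 * dot N x x = vnorm N s * vnorm N s) by (unfold a0; rewrite vnorm_sq; field; lra).
  assert (Hinvn : 0 < / (nrm k * nrm k)) by (apply Rinv_0_lt_compat; nra).
  assert (Ha0le : a0 <= / (nrm k * nrm k) * vnorm N s + vnorm N (a_ k) * (vnorm N s * tps)).
  { assert (a0 = / (nrm k * nrm k) * dot N (u k) (J s) - dot N (a_ k) r) by lra.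
    pose proof (Rle_abs (dot N (u k) (J s))). pose proof (Rle_abs (- dot N (a_ k) r)).
    rewrite Rabs_Ropp in *. nra. }
  pose proof (vnorm_nonneg N s). pose proof (vnorm_nonneg N (a_ k)).
  assert (Htps : 0 <= tps) by (apply sumN_nonneg; intros; apply vnorm_nonneg).
  destruct (Rle_lt_or_eq_dec 0 (vnorm N s) (vnorm_nonneg N s)) as [Hs|Hs].
  - apply Rmult_le_reg_r with (vnorm N s); auto. rewrite <- Ha0. nra.
  - rewrite <- Hs. apply Rmult_le_pos; [lra | nra].
Qed.

Lemma tangent_perp_size_null : null_seq tangent_perp_size.
Proof. apply null_seq_sumN. intros. apply gperp_ein_tangent_null, tangent_part_tangent. Qed.

Lemma gform_bounded : ev_bounded (fun k => vnorm N (a_ k)).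
Proof.
  apply (ev_bounded_le _ _
           (ev_bounded_sumN N (fun k i => vnorm N (G k (ev i))) (fun i _ => gmv_bounded (ev i)))).
  exists 0%nat. intros k _. rewrite Rabs_pos_eq by apply vnorm_nonneg. apply vnorm_gform_le.
Qed.

Lemma gperp_J_x_null : null_seq (fun k => vnorm N (F k (J x))).
Proof.
  apply (null_seq_le _ (fun k => dot N x x * (/ (nrm k * nrm k) + vnorm N (a_ k) * tangent_perp_size k))).
  - apply null_seq_scal, null_seq_plus; [apply gx_norm_inv_sq_null|].
    apply (null_seq_le _ _ (null_seq_abs _ (null_seq_mult _ _ tangent_perp_size_null gform_bounded))).
    exists 0%nat. intros. right. f_equal. ring.
  - exists 0%nat. intros k _. rewrite Rabs_pos_eq by apply vnorm_nonneg. apply vnorm_gperp_J_x_le.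
Qed.

Lemma Ein_gperp_ev_null j : (j < N)%nat -> null_seq (fun k => vnorm N (F k (ev j))).
Proof.
  intros Hj.
  apply (null_seq_le _ (fun k => Rabs (Jx_coef (ev j)) * vnorm N (F k (J x))
                                 + vnorm N (F k (tangent_part (ev j))))).
  - apply null_seq_plus; [apply null_seq_scal, gperp_J_x_null|].
    apply gperp_ein_tangent_null, tangent_part_tangent.
  - exists 0%nat. intros k _. rewrite gperp_decomp, Rabs_pos_eq by apply vnorm_nonneg.
    eapply Rle_trans; [apply vnorm_triang|]. rewrite vnorm_scal. lra.
Qed.

Lemma Ein_case : exists (phi : nat -> nat) (a : Vec),
  strict_incr phi /\ chart_center X a /\ in_chart X a x /\
  forall K : Vec -> Prop, compactX X K -> (exists y, K y) ->
    (forall y, K y -> in_chart X a y) ->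
    hconv_point X (fun k z => exists y, K y /\ z = mv N (g (phi k)) y) x.
Proof.
  destruct (chart_limit X g x Hinv Hx (pdist_gxu_null X g x Hinv Hxp Hcont)
              Ein_gperp_ev_null (fun j _ => gmv_bounded (ev j))) as [phi [a [Hphi [Ha [Hax Hlim]]]]].
  change (dot N a x = 1) in Hax.
  assert (Hiso : dot N a (J a) = 0).
  { apply (UL_sequence (fun k => dot N (a_ (phi k)) (J (a_ (phi k))))).
    - apply (dot_cv N (fun k => a_ (phi k)) (fun k => J (a_ (phi k)))); auto.
      intros i Hi. unfold Jv. destruct (Nat.ltb i (p + 1)); [now apply Ha|].
      apply (CV_opp (fun k => a_ (phi k) i)). now apply Ha.
    - intros e He. exists 0%nat. intros. unfold Rdist. now rewrite gform_J_isotropic, Rminus_diag, Rabs_R0. }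
  assert (HJa : forall y, qform p q (J a) y = dot N a y) by (intros; now rewrite qform_Jv, Jv_involutive).
  exists phi, (J a). repeat split; auto.
  - apply (dot_neq0_nonzero N _ (J x)). rewrite dot_Jv_Jv. lra.
  - simpl. rewrite HJa. exact Hiso.
  - apply Hxp.
  - apply Hxp.
  - simpl. rewrite HJa. lra.
  - intros K HK Hne HKa. apply Hlim; auto. intros y Ky. pose proof (proj2 (HKa y Ky)) as Hy.
    simpl in Hy. now rewrite HJa in Hy.
Qed.

End Einstein.

Theorem lemma4p5 (X : model) (g : nat -> Mat) (T : nat -> R) (x : Vec) :
  admissible X ->
  (forall k, in_group X (g k)) ->
  (forall k, 0 < T k) -> cv_infty T ->
  is_point X x ->
  (forall xs : nat -> Vec, (forall k, is_point X (xs k)) -> pconv X xs x ->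
     pconv X (fun k => mv (mdim X) (g k) (xs k)) x) ->
  (forall v, is_tangent X x v ->
     Un_cv (fun k => / T k * ln (dnorm (mdim X) (g k) x v)) (-1)) ->
  exists (phi : nat -> nat) (a : Vec),
    strict_incr phi /\ chart_center X a /\ in_chart X a x /\
    forall K : Vec -> Prop, compactX X K -> (exists y, K y) ->
      (forall y, K y -> in_chart X a y) ->
      hconv_point X (fun k z => exists y, K y /\ z = mv (mdim X) (g (phi k)) y) x.
Proof.
  destruct X as [n | p q]; intros Hadm Hg HT HTi Hxp Hcont Hrate.
  - exact (RPn_case n g T x Hg HT HTi Hxp Hcont Hrate).
  - destruct Hadm as [Hp Hq]. apply (Ein_case p q g T x); auto; lia.
Qed.
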